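(* Suppose $f$ satisfies (I), $f(\cdot,i,\mathbf q)\in C^1([0,\infty))$ for all $i\in S,\mathbf q\in D_i$, $f_t$ satisfies (I), and condition (R) holds. Let $Q^*\in\mathcal Q$ be such that $\Gamma^{Q^*}_i(Q^*_i)>\Gamma^{Q^*}_i(Q_i)$ for all $i\in S$ and all $Q\in\mathcal Q$ with $Q_i\ne Q^*_i$. Then $Q^*$ is a strong equilibrium.
   Context: Let $S=\{1,\dots,N\}$. For $i\in S$ let $E_i=\{q\in\mathbb R^N: q_j\ge0\text{ for }j\ne i,\ q_i=-\sum_{j\ne i}q_j\}$ and $D_i\subseteq E_i$ given; $\mathcal Q=\{Q\in\mathbb R^{N\times N}: Q_i\in D_i\ \forall i\}$, $Q_i$ the $i$-th row. For $Q\in\mathcal Q$, $X$ is a time-homogeneous continuous-time Markov chain on $S$ with generator $Q$, $\mathbb E_{i,Q}$ the expectation given $X_0=i$. A payoff function $f$ assigns $f(t,i,\mathbf q)\in\mathbb R$ to $t\ge0,i\in S,\mathbf q\in D_i$. Condition (I) for $g$: $\int_0^\infty\sup_{i\in S,\mathbf q\in D_i,\|\mathbf q\|\le c}|g(t,i,\mathbf q)|dt<\infty$ for all $c>0$. Condition (R): there is $r(t,\varepsilon;i,\mathbf q)$, continuous in $\varepsilon$, with $|f(t+\varepsilon,i,\mathbf q)-f(t,i,\mathbf q)-\varepsilon f_t(t,i,\mathbf q)|\le r(t,\varepsilon;i,\mathbf q)$ for all $t\ge0,\varepsilon>0,i,\mathbf q$, $\int_0^\infty r(t,\varepsilon;i,\mathbf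 q)dt<\infty$ for small $\varepsilon>0$, and $\varepsilon\mapsto r(t,\varepsilon;i,\mathbf q)/\varepsilon$ nondecreasing. $F(i,Q)=\mathbb E_{i,Q}[\int_0^\infty f(t,X_t,Q_{X_t})dt]$, $F(Q)=(F(1,Q),\dots,F(N,Q))$. $Q\otimes_\varepsilon Q'$: generator $Q$ on $[0,\varepsilon]$, then $Q'$ on $(\varepsilon,\infty)$; $F(i,Q\otimes_\varepsilon Q')$ its expected payoff from $X_0=i$. $Q^*\in\mathcal Q$ is a strong equilibrium if for every $i\in S$ and $Q\in\mathcal Q$ there is $\varepsilon>0$ with $F(i,Q^* )\ge F(i,Q\otimes_{\varepsilon'}Q^* )$ for all $0<\varepsilon'\le\varepsilon$. $\Gamma^{Q^*}_i(\mathbf q)=f(0,i,\mathbf q)+\mathbf q\cdot F(Q^* )$ for $\mathbf q\in D_i$. *)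

From Stdlib Require Import Reals Lra Classical ClassicalEpsilon FunctionalExtensionality.
Open Scope R_scope.

(* States S = {1,...,N} are encoded as 0,...,N-1 (i < N).
   A row q in R^N is encoded as a function nat -> R vanishing at indices >= N.
   A matrix is a function nat -> nat -> R (rows Q i). *)

Fixpoint rsum (n : nat) (g : nat -> R) : R :=
  match n with O => 0 | S m => rsum m g + g m end.

(* l1 norm of a row of R^N (all norms on R^N equivalent; only used in (I)) *)
Definition rnorm (N : nat) (q : nat -> R) : R := rsum N (fun j => Rabs (q j)).

Definition InE (N i : nat) (q : nat -> R) : Prop :=
  (forall j, (N <= j)%nat -> q j = 0) /\
  (forall j, (j < N)%nat -> j <> i -> 0 <= q j) /\
  q i = - rsum N (fun j => if Nat.eq_dec j i then 0 else q j).

Definition InQ (N : nat) (D : nat -> (nat -> R) -> Prop) (Q : nat -> nat -> R) : Prop :=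
  forall i, (i < N)%nat -> D i (Q i).

Definition idm (i j : nat) : R := if Nat.eq_dec i j then 1 else 0.
Definition matmul (N : nat) (A B : nat -> nat -> R) : nat -> nat -> R :=
  fun i j => rsum N (fun k => A i k * B k j).
Fixpoint matpow (N : nat) (A : nat -> nat -> R) (m : nat) : nat -> nat -> R :=
  match m with O => idm | S m' => matmul N (matpow N A m') A end.

(* limit of a real sequence (0 if it does not converge) *)
Definition seq_lim (u : nat -> R) : R :=
  match excluded_middle_informative (exists l, Un_cv u l) with
  | left H => proj1_sig (constructive_indefinite_description _ H)
  | right _ => 0
  end.

(* (exp (t Q))_{ij} = sum_m t^m (Q^m)_{ij} / m!  : the transition probability
   P(X_t = j | X_0 = i) of the chain with generator Q *)
Definition expm (N : nat) (Q : nat -> nat -> R) (t : R) (i j : nat) : R :=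
  seq_lim (fun n => rsum n (fun m => t ^ m / INR (Factorial.fact m) * matpow N Q m i j)).

(* Riemann integral over [a,b] (0 if g is not Riemann integrable there) *)
Definition Rint (a b : R) (g : R -> R) : R :=
  match excluded_middle_informative
          (exists pr : Riemann_integrable g a b, True) with
  | left H => RiemannInt (proj1_sig (constructive_indefinite_description _ H))
  | right _ => 0
  end.

Definition has_improper_int (g : R -> R) (l : R) : Prop :=
  forall eps, 0 < eps -> exists T0, forall T, T0 <= T -> Rabs (Rint 0 T g - l) < eps.

Definition improper_int (g : R -> R) : R :=
  match excluded_middle_informative (exists l, has_improper_int g l) with
  | left H => proj1_sig (constructive_indefinite_description _ H)
  | right _ => 0
  end.

(* y <= sup (Sset) in the extended reals (sup of the empty set taken as -oo) *)
Definition le_sup (Sset : R -> Prop) (y : R) : Prop :=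
  forall z, z < y -> exists x, Sset x /\ z < x.

(* "int_0^oo sup{x | Sset t x} dt < oo", the integrand being nonnegative:
   the (inner) integral, i.e. the supremum of the integrals of nonnegative
   Riemann-integrable functions lying below the integrand on [0,T], is finite.
   For nonnegative lower semicontinuous integrands (the case of (I) below,
   a supremum of continuous functions) this coincides with the Lebesgue
   integral. *)
Definition finite_int_sup (Sset : R -> R -> Prop) : Prop :=
  exists M, forall (T : R) (g : R -> R) (pr : Riemann_integrable g 0 T),
    0 <= T ->
    (forall t, 0 <= t <= T -> 0 <= g t /\ le_sup (Sset t) (g t)) ->
    RiemannInt pr <= M.

Definition finite_int (h : R -> R) : Prop :=
  finite_int_sup (fun t x => x = h t).

Definition payoff := R -> nat -> (nat -> R) -> R.

Definition CondI (N : nat) (D : nat -> (nat -> R) -> Prop) (g : payoff) : Prop :=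
  forall c, 0 < c ->
    finite_int_sup (fun t x => exists i q,
      (i < N)%nat /\ D i q /\ rnorm N q <= c /\ x = Rabs (g t i q)).

Definition C1_deriv_on_nonneg (h h' : R -> R) : Prop :=
  (forall t, 0 <= t -> forall eps, 0 < eps -> exists delta, 0 < delta /\
      forall s, s <> 0 -> Rabs s < delta -> 0 <= t + s ->
        Rabs ((h (t + s) - h t) / s - h' t) < eps) /\
  (forall t, 0 <= t -> forall eps, 0 < eps -> exists delta, 0 < delta /\
      forall s, 0 <= s -> Rabs (s - t) < delta -> Rabs (h' s - h' t) < eps).

Definition CondR (N : nat) (D : nat -> (nat -> R) -> Prop) (f ft : payoff) : Prop :=
  exists (r : R -> R -> nat -> (nat -> R) -> R),
    (forall t i q, (i < N)%nat -> D i q ->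
       forall e, 0 < e -> continuity_pt (fun e' => r t e' i q) e) /\
    (forall t e i q, 0 <= t -> 0 < e -> (i < N)%nat -> D i q ->
       Rabs (f (t + e) i q - f t i q - e * ft t i q) <= r t e i q) /\
    (forall i q, (i < N)%nat -> D i q ->
       exists e0, 0 < e0 /\ forall e, 0 < e <= e0 -> finite_int (fun t => r t e i q)) /\
    (forall t i q e1 e2, (i < N)%nat -> D i q -> 0 < e1 <= e2 ->
       r t e1 i q / e1 <= r t e2 i q / e2).

(* F(i,Q) = E_{i,Q}[ int_0^oo f(t, X_t, Q_{X_t}) dt ]
          = int_0^oo sum_j P_ij(t) f(t, j, Q_j) dt *)
Definition Fval (N : nat) (f : payoff) (Q : nat -> nat -> R) (i : nat) : R :=
  improper_int (fun t => rsum N (fun j => expm N Q t i j * f t j (Q j))).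

(* F(i, Q (x)_eps Q') : generator Q on [0,eps], then Q' on (eps,oo) *)
Definition Fconcat (N : nat) (f : payoff) (Q Q' : nat -> nat -> R) (eps : R) (i : nat) : R :=
  improper_int (fun t =>
    if Rle_dec t eps
    then rsum N (fun j => expm N Q t i j * f t j (Q j))
    else rsum N (fun j =>
           rsum N (fun k => expm N Q eps i k * expm N Q' (t - eps) k j) * f t j (Q' j))).

Definition Gamma (N : nat) (f : payoff) (Qs : nat -> nat -> R) (i : nat) (q : nat -> R) : R :=
  f 0 i q + rsum N (fun j => q j * Fval N f Qs j).

Definition StrongEq (N : nat) (D : nat -> (nat -> R) -> Prop) (f : payoff)
  (Qs : nat -> nat -> R) : Prop :=
  forall i Q, (i < N)%nat -> InQ N D Q ->
    exists eps, 0 < eps /\ forall e', 0 < e' <= eps ->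
      Fval N f Qs i >= Fconcat N f Q Qs e' i.

(* Fix a state [i] and a deviation [Q], and let [Phi s] be the payoff of following
   [Q] on [[0, s]] and the candidate equilibrium [Qs] afterwards, so that
   [Phi 0 = F(i, Qs)] and [Phi e = F(i, Q ⊗_e Qs)].  By the Markov property,
   [Phi (s + h) - Phi s] is an average, over the state [k] occupied at time [s],
   of the gain of using [Q] rather than [Qs] on [[s, s + h]].  Expanding
   [exp (h Q)] to second order and using that [f] is Lipschitz near [t = 0], this
   gain is [h (Gamma_k(Q_k) - Gamma_k(Qs_k)) + O(h (s + h)) + O(h^2)], the middle
   term vanishing when [Q_k = Qs_k]; by the strict maximality of [Gamma_k] at
   [Qs_k] it is at most [C h^2] once [s + h] is small.  Telescoping over [n] steps
   of length [e / n] gives [Phi e - Phi 0 <= C e^2 / n] for every [n], hence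
   [Phi e <= Phi 0]. *)

From Stdlib Require Import Reals Lra Lia Classical ClassicalEpsilon FunctionalExtensionality.
From Coquelicot Require Import Coquelicot.
Open Scope R_scope.

(** * Finite sums and matrices *)

Lemma Rabs_minus_le a b : Rabs (a - b) <= Rabs a + Rabs b.
Proof. unfold Rminus. rewrite <- (Rabs_Ropp b). apply Rabs_triang. Qed.

Lemma rsum_ext n g h : (forall m, (m < n)%nat -> g m = h m) -> rsum n g = rsum n h.
Proof.
  induction n as [|n IH]; intros E; simpl; [reflexivity|].
  rewrite IH, E by (intros; try apply E; lia); reflexivity.
Qed.

Lemma rsum_plus n g h : rsum n (fun m => g m + h m) = rsum n g + rsum n h.
Proof. induction n; simpl; [ring|]. rewrite IHn; ring. Qed.

Lemma rsum_minus n g h : rsum n (fun m => g m - h m) = rsum n g - rsum n h.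
Proof. induction n; simpl; [ring|]. rewrite IHn; ring. Qed.

Lemma rsum_scal_l n c g : rsum n (fun m => c * g m) = c * rsum n g.
Proof. induction n; simpl; [ring|]. rewrite IHn; ring. Qed.

Lemma rsum_scal_r n c g : rsum n (fun m => g m * c) = rsum n g * c.
Proof. induction n; simpl; [ring|]. rewrite IHn; ring. Qed.

Lemma rsum_const n c : rsum n (fun _ => c) = INR n * c.
Proof. induction n; simpl rsum; [simpl; ring|]. rewrite IHn, S_INR; ring. Qed.

Lemma rsum_eq_0 n g : (forall m, (m < n)%nat -> g m = 0) -> rsum n g = 0.
Proof. intros E. rewrite (rsum_ext n g (fun _ => 0)), rsum_const by exact E. ring. Qed.

Lemma rsum_exchange n p g :
  rsum n (fun a => rsum p (fun b => g a b)) = rsum p (fun b => rsum n (fun a => g a b)).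
Proof.
  induction n; simpl.
  - symmetry; apply rsum_eq_0; auto.
  - rewrite IHn, <- rsum_plus; reflexivity.
Qed.

Lemma rsum_shift n g : rsum (S n) g = g 0%nat + rsum n (fun m => g (S m)).
Proof. induction n; simpl in *; [ring|]. rewrite IHn; ring. Qed.

Lemma rsum_telescope (u : nat -> R) n : rsum n (fun m => u (S m) - u m) = u n - u 0%nat.
Proof. induction n; simpl; [ring|]. rewrite IHn; ring. Qed.

Lemma rsum_sum_f_R0 n g : rsum (S n) g = sum_f_R0 g n.
Proof. induction n; simpl in *; [ring|]. rewrite <- IHn; reflexivity. Qed.

Lemma rsum_le n g h : (forall m, (m < n)%nat -> g m <= h m) -> rsum n g <= rsum n h.
Proof.
  induction n; simpl; intros H; [lra|].
  assert (g n <= h n) by (apply H; lia).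
  assert (rsum n g <= rsum n h) by (apply IHn; intros; apply H; lia).
  lra.
Qed.

Lemma rsum_nonneg n g : (forall m, (m < n)%nat -> 0 <= g m) -> 0 <= rsum n g.
Proof.
  intros H. replace 0 with (rsum n (fun _ => 0)) by (rewrite rsum_const; ring).
  apply rsum_le; auto.
Qed.

Lemma rsum_le_const n g c : (forall m, (m < n)%nat -> g m <= c) -> rsum n g <= INR n * c.
Proof. intros H. rewrite <- rsum_const. apply rsum_le; auto. Qed.

Lemma Rabs_rsum n g : Rabs (rsum n g) <= rsum n (fun m => Rabs (g m)).
Proof.
  induction n; simpl; [rewrite Rabs_R0; lra|].
  eapply Rle_trans; [apply Rabs_triang|]. lra.
Qed.

Lemma rsum_term_le n g m :
  (forall k, (k < n)%nat -> 0 <= g k) -> (m < n)%nat -> g m <= rsum n g.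
Proof.
  induction n; intros H Hm; [lia|]. simpl.
  assert (0 <= g n) by (apply H; lia).
  destruct (Nat.eq_dec m n) as [->|ne].
  - assert (0 <= rsum n g) by (apply rsum_nonneg; auto). lra.
  - assert (g m <= rsum n g) by (apply IHn; auto; lia). lra.
Qed.

Lemma rsum_idm_l n i g : (i < n)%nat -> rsum n (fun k => idm i k * g k) = g i.
Proof.
  induction n; intros Hi; [lia|]. simpl. unfold idm at 2.
  destruct (Nat.eq_dec i n) as [->|ne].
  - rewrite rsum_eq_0; [ring|]. intros m Hm. unfold idm.
    destruct (Nat.eq_dec n m); [lia|ring].
  - rewrite IHn by lia. ring.
Qed.

Lemma rsum_idm_r n j g : (j < n)%nat -> rsum n (fun k => g k * idm k j) = g j.
Proof.
  intros Hj. rewrite <- (rsum_idm_l n j g Hj). apply rsum_ext. intros m _.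
  unfold idm. destruct (Nat.eq_dec m j), (Nat.eq_dec j m); subst; try lia; ring.
Qed.

Definition meq (N : nat) (A B : nat -> nat -> R) : Prop :=
  forall i j, (i < N)%nat -> (j < N)%nat -> A i j = B i j.

Lemma matmul_assoc N A B C i j :
  matmul N (matmul N A B) C i j = matmul N A (matmul N B C) i j.
Proof.
  unfold matmul.
  transitivity (rsum N (fun l => rsum N (fun k => A i k * B k l * C l j))).
  - apply rsum_ext; intros. rewrite <- rsum_scal_r. reflexivity.
  - rewrite rsum_exchange. apply rsum_ext; intros. rewrite <- rsum_scal_l.
    apply rsum_ext; intros; ring.
Qed.

Lemma matmul_meq N A A' B B' :
  meq N A A' -> meq N B B' -> meq N (matmul N A B) (matmul N A' B').
Proof.
  intros EA EB i j Hi Hj. unfold matmul. apply rsum_ext; intros.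
  rewrite EA, EB by auto. reflexivity.
Qed.

Lemma matmul_idm_l N A i j : (i < N)%nat -> matmul N idm A i j = A i j.
Proof. intros. apply (rsum_idm_l N i (fun k => A k j)); auto. Qed.

Lemma matmul_idm_r N A i j : (j < N)%nat -> matmul N A idm i j = A i j.
Proof. intros. apply (rsum_idm_r N j (fun k => A i k)); auto. Qed.

Lemma matpow_add N A m n :
  meq N (matpow N A (m + n)) (matmul N (matpow N A m) (matpow N A n)).
Proof.
  induction n; intros i j Hi Hj.
  - rewrite Nat.add_0_r. simpl. rewrite matmul_idm_r; auto.
  - rewrite Nat.add_succ_r. simpl. rewrite <- matmul_assoc.
    apply matmul_meq; auto. intros ? ? ? ?; reflexivity.
Qed.

Lemma Rabs_matpow_le N A a :
  0 <= a -> (forall k j, (k < N)%nat -> Rabs (A k j) <= a) ->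
  forall m i j, Rabs (matpow N A m i j) <= (INR N * a) ^ m.
Proof.
  intros Ha HA. induction m; intros i j; simpl.
  - unfold idm. destruct Nat.eq_dec; rewrite ?Rabs_R1, ?Rabs_R0; lra.
  - unfold matmul. eapply Rle_trans; [apply Rabs_rsum|].
    replace (INR N * a * (INR N * a) ^ m) with (INR N * ((INR N * a) ^ m * a)) by ring.
    apply rsum_le_const. intros k Hk. rewrite Rabs_mult.
    apply Rmult_le_compat; auto using Rabs_pos.
Qed.

Lemma matpow_nonneg N A :
  (forall k j, (k < N)%nat -> (j < N)%nat -> 0 <= A k j) ->
  forall m i j, (j < N)%nat -> 0 <= matpow N A m i j.
Proof.
  intros HA. induction m; intros i j Hj; simpl.
  - unfold idm. destruct Nat.eq_dec; lra.
  - apply rsum_nonneg. intros. apply Rmult_le_pos; auto.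
Qed.

Lemma matpow_rowsum_0 N A :
  (forall k, (k < N)%nat -> rsum N (A k) = 0) ->
  forall m i, rsum N (matpow N A (S m) i) = 0.
Proof.
  intros HA m i. simpl. unfold matmul. rewrite rsum_exchange.
  apply rsum_eq_0. intros k Hk. rewrite rsum_scal_l, HA by auto. ring.
Qed.

(** [binom n k] is Pascal's triangle extended by zeros above the diagonal, so
    that Pascal's rule holds with no side condition. *)
Fixpoint binom (n k : nat) : R :=
  match n, k with
  | O, O => 1
  | O, S _ => 0
  | S n', O => 1
  | S n', S k' => binom n' k' + binom n' (S k')
  end.

Lemma binom_n_0 n : binom n 0 = 1.
Proof. destruct n; reflexivity. Qed.

Lemma binom_gt n k : (n < k)%nat -> binom n k = 0.
Proof.
  revert k; induction n; intros k H; destruct k; simpl; try lia; try reflexivity.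
  rewrite !IHn by lia. ring.
Qed.

Lemma binom_C n k : (k <= n)%nat -> binom n k = Binomial.C n k.
Proof.
  assert (C0 : forall n, Binomial.C n 0 = 1).
  { intros m. unfold Binomial.C. rewrite Nat.sub_0_r. simpl. field. apply INR_fact_neq_0. }
  assert (Cn : forall n, Binomial.C n n = 1).
  { intros m. unfold Binomial.C. rewrite Nat.sub_diag. simpl. field. apply INR_fact_neq_0. }
  revert k; induction n; intros k H.
  - destruct k; [|lia]. rewrite C0. reflexivity.
  - destruct k; [rewrite binom_n_0, C0; reflexivity|]. simpl.
    destruct (Nat.eq_dec k n) as [->|ne].
    + rewrite (binom_gt n (S n)), IHn, !Cn by lia. ring.
    + rewrite !IHn by lia. apply pascal. lia.
Qed.

Lemma C_div_fact p m : (m <= p)%nat ->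
  Binomial.C p m / INR (Factorial.fact p) = / (INR (Factorial.fact m) * INR (Factorial.fact (p - m))).
Proof.
  intros. unfold Binomial.C. field. repeat split; apply INR_fact_neq_0.
Qed.

Lemma rsum_binom_step (y : nat -> R) c p :
  rsum (S (S p)) (fun m => binom (S p) m * c ^ m * y (S p - m)%nat) =
  rsum (S p) (fun m => binom p m * c ^ m * y (S (p - m)))
  + c * rsum (S p) (fun m => binom p m * c ^ m * y (p - m)%nat).
Proof.
  rewrite rsum_shift, <- rsum_scal_l.
  rewrite (rsum_ext (S p) _ (fun m => binom p (S m) * c ^ S m * y (p - m)%nat
                                     + c * (binom p m * c ^ m * y (p - m)%nat)))
    by (intros m _; simpl; ring).
  rewrite rsum_plus, (rsum_shift p (fun m => binom p m * c ^ m * y (S (p - m)))).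
  change (rsum (S p) (fun m => binom p (S m) * c ^ S m * y (p - m)%nat)) with
    (rsum p (fun m => binom p (S m) * c ^ S m * y (p - m)%nat)
     + binom p (S p) * c ^ S p * y (p - p)%nat).
  rewrite (binom_gt p (S p)), !binom_n_0, !Nat.sub_0_r by lia.
  rewrite (rsum_ext p (fun m => binom p (S m) * c ^ S m * y (p - m)%nat)
                      (fun m => binom p (S m) * c ^ S m * y (S (p - S m))))
    by (intros m Hm; replace (S (p - S m)) with (p - m)%nat by lia; reflexivity).
  simpl; ring.
Qed.

Lemma matpow_plus_scalar N A c p :
  meq N (matpow N (fun a b => A a b + c * idm a b) p)
    (fun i j => rsum (S p) (fun m => binom p m * c ^ m * matpow N A (p - m) i j)).
Proof.
  induction p; intros i j Hi Hj; [simpl; ring|].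
  change (matpow N (fun a b => A a b + c * idm a b) (S p))
    with (matmul N (matpow N (fun a b => A a b + c * idm a b) p)
                   (fun a b => A a b + c * idm a b)).
  rewrite (matmul_meq N _ _ _ _ IHp (fun _ _ _ _ => eq_refl) i j Hi Hj).
  rewrite (rsum_binom_step (fun k => matpow N A k i j)). unfold matmul at 1.
  set (Z := fun i k => rsum (S p) (fun m => binom p m * c ^ m * matpow N A (p - m) i k)).
  change (rsum N (fun k => Z i k * (A k j + c * idm k j)) =
    rsum (S p) (fun m => binom p m * c ^ m * matpow N A (S (p - m)) i j) + c * Z i j).
  rewrite (rsum_ext N _ (fun k => Z i k * A k j + c * (Z i k * idm k j))) by (intros; ring).
  rewrite rsum_plus, rsum_scal_l, (rsum_idm_r N j (Z i)) by auto. f_equal.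
  unfold Z. rewrite (rsum_ext N _ (fun k => rsum (S p)
      (fun m => binom p m * c ^ m * matpow N A (p - m) i k * A k j)))
    by (intros; rewrite <- rsum_scal_r; reflexivity).
  rewrite rsum_exchange. apply rsum_ext. intros m _. simpl. unfold matmul.
  rewrite <- rsum_scal_l. apply rsum_ext. intros; ring.
Qed.

(** * Series and the matrix exponential *)

Lemma is_series_Un_cv a l : is_series a l <-> Un_cv (fun n => rsum n a) l.
Proof.
  rewrite is_series_Reals. unfold infinite_sum, Un_cv.
  split; intros H eps He; destruct (H eps He) as [M HM].
  - exists (S M). intros [|n] Hn; [lia|]. rewrite rsum_sum_f_R0. apply HM. lia.
  - exists M. intros n Hn. rewrite <- rsum_sum_f_R0. apply HM. lia.
Qed.

Lemma rsum_stationary a n p :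
  (forall m, (n <= m)%nat -> a m = 0) -> (n <= p)%nat -> rsum p a = rsum n a.
Proof.
  intros Ha Hp. induction Hp as [|p Hp IH]; [reflexivity|].
  simpl. rewrite IH, Ha by exact Hp. ring.
Qed.

Lemma is_series_finite a n :
  (forall m, (n <= m)%nat -> a m = 0) -> is_series a (rsum n a).
Proof.
  intros Ha. apply is_series_Un_cv. intros eps He. exists n. intros p Hp.
  rewrite (rsum_stationary a n p) by (auto; lia). rewrite R_dist_eq. exact He.
Qed.

Lemma is_series_rsum n (a : nat -> nat -> R) l :
  (forall k, (k < n)%nat -> is_series (a k) (l k)) ->
  is_series (fun m => rsum n (fun k => a k m)) (rsum n l).
Proof.
  induction n as [|n IH]; intros H; simpl.
  - apply (is_series_finite (fun _ => 0) 0). reflexivity.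
  - apply (is_series_plus (fun m => rsum n (fun k => a k m)) (a n)).
    + apply IH. intros; apply H; lia.
    + apply H; lia.
Qed.

Lemma Un_cv_const c : Un_cv (fun _ => c) c.
Proof. intros eps He. exists 0%nat. intros. rewrite R_dist_eq. exact He. Qed.

Lemma Un_cv_le_const u l c : Un_cv u l -> (forall n, u n <= c) -> l <= c.
Proof. intros Hu H. exact (Rle_cv_lim H Hu (Un_cv_const c)). Qed.

Lemma Un_cv_ge_const u l c : Un_cv u l -> (forall n, c <= u n) -> c <= l.
Proof. intros Hu H. exact (Rle_cv_lim H (Un_cv_const c) Hu). Qed.

Lemma is_series_nonneg a l : (forall m, 0 <= a m) -> is_series a l -> 0 <= l.
Proof.
  intros Ha Hl. apply is_series_Un_cv in Hl. apply (Un_cv_ge_const _ _ _ Hl).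
  intros n. apply rsum_nonneg. auto.
Qed.

Lemma Rabs_is_series_tail_le a l B lB n0 :
  is_series a l -> is_series B lB -> (forall m, 0 <= B m) ->
  (forall m, (n0 <= m)%nat -> Rabs (a m) <= B m) ->
  Rabs (l - rsum n0 a) <= lB.
Proof.
  intros Ha HB HB0 Hab. apply is_series_Un_cv in Ha. apply is_series_Un_cv in HB.
  assert (HBle : forall n, rsum n B <= lB).
  { apply growing_ineq; auto. intros n. simpl. specialize (HB0 n). lra. }
  assert (Htail : forall d, Rabs (rsum (d + n0) a - rsum n0 a) <= lB).
  { intros d. apply (Rle_trans _ (rsum (d + n0) B - rsum n0 B)).
    2: { assert (0 <= rsum n0 B) by (apply rsum_nonneg; auto). specialize (HBle (d + n0)%nat). lra. }
    induction d; simpl.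
    - rewrite !Rminus_diag, Rabs_R0. lra.
    - assert (Rabs (a (d + n0)%nat) <= B (d + n0)%nat) by (apply Hab; lia).
      replace (rsum (d + n0) a + a (d + n0)%nat - rsum n0 a)
        with ((rsum (d + n0) a - rsum n0 a) + a (d + n0)%nat) by ring.
      eapply Rle_trans; [apply Rabs_triang|]. lra. }
  assert (Hcv := CV_minus _ _ _ _ (CV_shift' _ n0 _ Ha) (Un_cv_const (rsum n0 a))).
  apply Rabs_le. split.
  - apply (Un_cv_ge_const _ _ _ Hcv). intros n. specialize (Htail n).
    apply Rabs_le_between in Htail. lra.
  - apply (Un_cv_le_const _ _ _ Hcv). intros n. specialize (Htail n).
    apply Rabs_le_between in Htail. lra.
Qed.

Lemma is_series_exp x : is_series (fun m => x ^ m / INR (Factorial.fact m)) (exp x).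
Proof.
  generalize (is_exp_Reals x). unfold is_pseries. apply is_series_ext. intros n.
  change (scal (pow_n x n) (/ INR (Factorial.fact n))) with (pow_n x n * / INR (Factorial.fact n)).
  rewrite pow_n_pow. reflexivity.
Qed.

Lemma ex_series_Rabs_exp x : ex_series (fun m => Rabs (x ^ m / INR (Factorial.fact m))).
Proof.
  exists (exp (Rabs x)). refine (is_series_ext _ _ _ _ (is_series_exp (Rabs x))).
  intros m. unfold Rdiv. rewrite Rabs_mult, Rabs_inv, RPow_abs, (Rabs_right (INR _)); [reflexivity|].
  apply Rle_ge, pos_INR.
Qed.

Lemma seq_lim_eq u l : Un_cv u l -> seq_lim u = l.
Proof.
  intros H. unfold seq_lim. destruct excluded_middle_informative as [e|ne].
  - destruct constructive_indefinite_description as [l' Hl']. simpl. eapply UL_sequence; eauto.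
  - exfalso. apply ne. eauto.
Qed.

Definition expm_term (N : nat) (A : nat -> nat -> R) (t : R) (i j m : nat) : R :=
  t ^ m / INR (Factorial.fact m) * matpow N A m i j.

Definition bounded_entries (N : nat) (A : nat -> nat -> R) : Prop :=
  exists a, 0 <= a /\ forall k j, (k < N)%nat -> Rabs (A k j) <= a.

Section MatrixExponential.

Variables (N : nat) (A : nat -> nat -> R).
Hypothesis HA : bounded_entries N A.

Lemma Rabs_expm_term_le :
  exists K, 0 <= K /\ forall t i j m,
    Rabs (expm_term N A t i j m) <= (Rabs t * K) ^ m / INR (Factorial.fact m).
Proof.
  destruct HA as [a [Ha Hb]]. exists (INR N * a).
  split; [apply Rmult_le_pos; auto using pos_INR|]. intros t i j m.
  assert (Hf : 0 < / INR (Factorial.fact m)) by apply Rinv_0_lt_compat, INR_fact_lt_0.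
  assert (Hp : Rabs (matpow N A m i j) <= (INR N * a) ^ m) by (apply Rabs_matpow_le; auto).
  assert (0 <= Rabs t ^ m) by (apply pow_le, Rabs_pos).
  unfold expm_term, Rdiv. rewrite !Rabs_mult, <- RPow_abs, Rabs_inv, Rpow_mult_distr.
  rewrite (Rabs_right (INR _)) by (apply Rle_ge, pos_INR).
  replace (Rabs t ^ m * (INR N * a) ^ m * / INR (Factorial.fact m))
    with (Rabs t ^ m * / INR (Factorial.fact m) * (INR N * a) ^ m) by ring.
  apply Rmult_le_compat_l; auto. apply Rmult_le_pos; lra.
Qed.

Lemma ex_series_Rabs_expm_term t i j : ex_series (fun m => Rabs (expm_term N A t i j m)).
Proof.
  destruct Rabs_expm_term_le as [K [_ HK]].
  apply (@ex_series_le R_AbsRing R_CompleteNormedModule) with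
    (b := fun m => (Rabs t * K) ^ m / INR (Factorial.fact m)).
  - intros m. change (norm (Rabs (expm_term N A t i j m))) with (Rabs (Rabs (expm_term N A t i j m))).
    rewrite Rabs_Rabsolu. apply HK.
  - eexists. apply is_series_exp.
Qed.

Lemma is_series_expm t i j : is_series (expm_term N A t i j) (expm N A t i j).
Proof.
  destruct (ex_series_Rabs _ (ex_series_Rabs_expm_term t i j)) as [l Hl].
  unfold expm. fold (expm_term N A t i j).
  rewrite (seq_lim_eq _ l); [exact Hl|]. apply is_series_Un_cv, Hl.
Qed.

Lemma expm_0 i j : expm N A 0 i j = idm i j.
Proof.
  rewrite <- (is_series_unique _ _ (is_series_expm 0 i j)).
  assert (Hfin : forall m, (1 <= m)%nat -> expm_term N A 0 i j m = 0).
  { intros [|m] Hm; [lia|]. unfold expm_term. simpl. unfold Rdiv. ring. }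
  rewrite (is_series_unique _ _ (is_series_finite _ 1 Hfin)).
  unfold expm_term. simpl. field.
Qed.

Lemma expm_tail_le :
  exists C, 0 <= C /\ forall n h i j, 0 <= h <= 1 ->
    Rabs (expm N A h i j - rsum n (expm_term N A h i j)) <= C * h ^ n.
Proof.
  destruct Rabs_expm_term_le as [K [HK Hterm]]. exists (exp K).
  split; [left; apply exp_pos|]. intros n h i j Hh.
  assert (Hc : forall m, 0 <= K ^ m / INR (Factorial.fact m))
    by (intros; apply Rmult_le_pos; [apply pow_le; auto|left; apply Rinv_0_lt_compat, INR_fact_lt_0]).
  rewrite Rmult_comm.
  apply (Rabs_is_series_tail_le _ _ (fun m => h ^ n * (K ^ m / INR (Factorial.fact m)))).
  - apply is_series_expm.
  - exact (is_series_scal_l (h ^ n) _ _ (is_series_exp K)).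
  - intros m. apply Rmult_le_pos; auto. apply pow_le; lra.
  - intros m Hm. eapply Rle_trans; [apply Hterm|].
    rewrite Rabs_right, Rpow_mult_distr by lra. unfold Rdiv. rewrite Rmult_assoc.
    apply Rmult_le_compat_r; [apply Hc|].
    replace m with (n + (m - n))%nat by lia. rewrite pow_add.
    rewrite <- (Rmult_1_r (h ^ n)) at 2. apply Rmult_le_compat_l; [apply pow_le; lra|].
    rewrite <- (pow1 (m - n)). apply pow_incr. lra.
Qed.

Lemma expm_near_idm :
  exists C, 0 <= C /\ forall h i j, 0 <= h <= 1 -> Rabs (expm N A h i j - idm i j) <= C * h.
Proof.
  destruct expm_tail_le as [C [HC Htail]]. exists C. split; [exact HC|]. intros h i j Hh.
  specialize (Htail 1%nat h i j Hh). unfold expm_term in Htail. simpl in Htail.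
  replace (0 + 1 / 1 * idm i j) with (idm i j) in Htail by field.
  rewrite Rmult_1_r in Htail. exact Htail.
Qed.

Lemma expm_near_linear :
  exists C, 0 <= C /\ forall h i j, (i < N)%nat -> 0 <= h <= 1 ->
    Rabs (expm N A h i j - idm i j - h * A i j) <= C * h ^ 2.
Proof.
  destruct expm_tail_le as [C [HC Htail]]. exists C. split; [exact HC|]. intros h i j Hi Hh.
  specialize (Htail 2%nat h i j Hh). unfold expm_term in Htail. simpl in Htail.
  rewrite matmul_idm_l in Htail by exact Hi.
  replace (expm N A h i j - idm i j - h * A i j)
    with (expm N A h i j - (0 + 1 / 1 * idm i j + h * 1 / 1 * A i j)) by field.
  exact Htail.
Qed.

Lemma expm_term_cauchy_product s t i j p : (i < N)%nat -> (j < N)%nat ->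
  rsum N (fun k => sum_f_R0 (fun m => expm_term N A s i k m * expm_term N A t k j (p - m)) p)
  = expm_term N A (s + t) i j p.
Proof.
  intros Hi Hj.
  rewrite (rsum_ext N _ (fun k => rsum (S p)
     (fun m => expm_term N A s i k m * expm_term N A t k j (p - m))))
    by (intros; rewrite rsum_sum_f_R0; reflexivity).
  rewrite rsum_exchange.
  rewrite (rsum_ext (S p) _ (fun m => Binomial.C p m * s ^ m * t ^ (p - m)
                                     / INR (Factorial.fact p) * matpow N A p i j)).
  - unfold expm_term. rewrite rsum_scal_r. f_equal.
    unfold Rdiv. rewrite rsum_scal_r, rsum_sum_f_R0, <- binomial. reflexivity.
  - intros m Hm. unfold expm_term.
    replace (matpow N A p i j) with (matmul N (matpow N A m) (matpow N A (p - m)) i j)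
      by (rewrite <- matpow_add by auto; f_equal; lia).
    replace (Binomial.C p m * s ^ m * t ^ (p - m) / INR (Factorial.fact p))
      with (s ^ m * t ^ (p - m) * (Binomial.C p m / INR (Factorial.fact p))) by (unfold Rdiv; ring).
    rewrite C_div_fact by lia. unfold matmul. rewrite <- rsum_scal_l.
    apply rsum_ext. intros. field. split; apply INR_fact_neq_0.
Qed.

Lemma expm_plus s t i j : (i < N)%nat -> (j < N)%nat ->
  expm N A (s + t) i j = rsum N (fun k => expm N A s i k * expm N A t k j).
Proof.
  intros Hi Hj. rewrite <- (is_series_unique _ _ (is_series_expm (s + t) i j)).
  apply is_series_unique.
  apply (is_series_ext (fun p => rsum N (fun k =>
           sum_f_R0 (fun m => expm_term N A s i k m * expm_term N A t k j (p - m)) p))).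
  - intros p. apply expm_term_cauchy_product; auto.
  - apply is_series_rsum. intros k Hk.
    apply is_series_mult; auto using is_series_expm, ex_series_Rabs_expm_term.
Qed.

End MatrixExponential.

Lemma bounded_entries_plus_scalar N A c :
  bounded_entries N A -> bounded_entries N (fun a b => A a b + c * idm a b).
Proof.
  intros [a [Ha HA]]. exists (a + Rabs c). split; [generalize (Rabs_pos c); lra|].
  intros k j Hk. eapply Rle_trans; [apply Rabs_triang|]. apply Rplus_le_compat; auto.
  rewrite Rabs_mult. rewrite <- (Rmult_1_r (Rabs c)) at 2.
  apply Rmult_le_compat_l; [apply Rabs_pos|].
  unfold idm. destruct Nat.eq_dec; rewrite ?Rabs_R1, ?Rabs_R0; lra.
Qed.

(** Cauchy product of the series of [exp (c t)] and [exp (t A)], matched termwise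
    by the binomial formula [matpow_plus_scalar]. *)
Lemma expm_plus_scalar N A c t i j : bounded_entries N A -> (i < N)%nat -> (j < N)%nat ->
  expm N (fun a b => A a b + c * idm a b) t i j = exp (c * t) * expm N A t i j.
Proof.
  intros HA Hi Hj.
  rewrite <- (is_series_unique _ _ (is_series_expm N _ (bounded_entries_plus_scalar N A c HA) t i j)).
  apply is_series_unique.
  apply (is_series_ext (fun p => sum_f_R0
           (fun m => (c * t) ^ m / INR (Factorial.fact m) * expm_term N A t i j (p - m)) p)).
  - intros p. unfold expm_term at 2. rewrite (matpow_plus_scalar N A c p i j Hi Hj).
    rewrite <- rsum_sum_f_R0, <- rsum_scal_l. apply rsum_ext. intros m Hm.
    unfold expm_term. rewrite binom_C by lia.
    replace (t ^ p) with (t ^ (m + (p - m))) by (f_equal; lia).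
    replace (Binomial.C p m) with (Binomial.C p m / INR (Factorial.fact p) * INR (Factorial.fact p))
      by (field; apply INR_fact_neq_0).
    rewrite C_div_fact, pow_add, Rpow_mult_distr by lia.
    field. repeat split; apply INR_fact_neq_0.
  - apply is_series_mult; auto using is_series_exp, is_series_expm, ex_series_Rabs_expm_term.
    apply ex_series_Rabs_exp.
Qed.

Definition is_generator (N : nat) (Q : nat -> nat -> R) : Prop :=
  (forall k j, (k < N)%nat -> (N <= j)%nat -> Q k j = 0) /\
  (forall k j, (k < N)%nat -> (j < N)%nat -> k <> j -> 0 <= Q k j) /\
  (forall k, (k < N)%nat -> rsum N (Q k) = 0).

Lemma InQ_is_generator N D Q :
  (forall i q, (i < N)%nat -> D i q -> InE N i q) -> InQ N D Q -> is_generator N Q.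
Proof.
  intros HD HQ.
  assert (Hrow : forall k, (k < N)%nat -> InE N k (Q k)) by (intros; apply HD, HQ; auto).
  split; [|split].
  - intros k j Hk Hj. exact (proj1 (Hrow k Hk) j Hj).
  - intros k j Hk Hj ne. apply (proj1 (proj2 (Hrow k Hk))); auto.
  - intros k Hk. destruct (Hrow k Hk) as [_ [_ Hdiag]].
    rewrite (rsum_ext N (Q k) (fun j => (if Nat.eq_dec j k then 0 else Q k j) + Q k k * idm j k))
      by (intros j _; unfold idm; destruct Nat.eq_dec; subst; ring).
    rewrite rsum_plus, rsum_idm_r by exact Hk. lra.
Qed.

Section Generator.

Variables (N : nat) (Q : nat -> nat -> R).
Hypothesis HQ : is_generator N Q.

Lemma generator_bounded_entries : bounded_entries N Q.
Proof.
  destruct HQ as [H0 _].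
  exists (rsum N (fun k => rsum N (fun j => Rabs (Q k j)))).
  assert (Hpos : forall k, 0 <= rsum N (fun j => Rabs (Q k j)))
    by (intros; apply rsum_nonneg; intros; apply Rabs_pos).
  split; [apply rsum_nonneg; auto|]. intros k j Hk.
  destruct (Compare_dec.lt_dec j N) as [Hj|Hj].
  - eapply Rle_trans; [|apply (rsum_term_le N (fun k => rsum N (fun j => Rabs (Q k j))) k); auto].
    apply (rsum_term_le N (fun j => Rabs (Q k j))); auto using Rabs_pos.
  - rewrite H0, Rabs_R0 by lia. apply rsum_nonneg; auto.
Qed.

Lemma expm_nonneg t i j : 0 <= t -> (i < N)%nat -> (j < N)%nat -> 0 <= expm N Q t i j.
Proof.
  intros Ht Hi Hj. destruct generator_bounded_entries as [a [Ha HQa]].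
  destruct HQ as [_ [Hoff _]].
  (* [Q + a I] has nonnegative entries and [exp (t Q) = exp (- a t) exp (t (Q + a I))]. *)
  set (A := fun k l => Q k l + a * idm k l).
  assert (HA : bounded_entries N A) by apply bounded_entries_plus_scalar, generator_bounded_entries.
  assert (EQ : (fun k l => A k l + - a * idm k l) = Q)
    by (apply functional_extensionality; intros k; apply functional_extensionality; intros l;
        unfold A; ring).
  rewrite <- EQ, expm_plus_scalar by auto.
  apply Rmult_le_pos; [left; apply exp_pos|].
  apply (is_series_nonneg (expm_term N A t i j)); [|apply is_series_expm; auto].
  intros m. apply Rmult_le_pos.
  - apply Rmult_le_pos; [apply pow_le; auto|left; apply Rinv_0_lt_compat, INR_fact_lt_0].
  - apply matpow_nonneg; auto. intros k l Hk Hl. unfold A, idm.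
    destruct (Nat.eq_dec k l) as [->|ne].
    + specialize (HQa l l Hk). apply Rabs_le_between in HQa. lra.
    + specialize (Hoff k l Hk Hl ne). lra.
Qed.

Lemma expm_rowsum t i : (i < N)%nat -> rsum N (expm N Q t i) = 1.
Proof.
  intros Hi. destruct HQ as [_ [_ Hrow]].
  rewrite <- (is_series_unique _ _ (is_series_rsum N (fun j => expm_term N Q t i j) (expm N Q t i)
                   (fun j _ => is_series_expm N Q generator_bounded_entries t i j))).
  assert (Hfin : forall m, (1 <= m)%nat -> rsum N (fun j => expm_term N Q t i j m) = 0).
  { intros [|m] Hm; [lia|]. unfold expm_term.
    rewrite rsum_scal_l, (matpow_rowsum_0 N Q Hrow m i). ring. }
  rewrite (is_series_unique _ _ (is_series_finite _ 1 Hfin)). simpl.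
  unfold expm_term. simpl.
  rewrite Rplus_0_l, (rsum_ext N _ (fun j => idm i j * 1)) by (intros; field).
  exact (rsum_idm_l N i (fun _ => 1) Hi).
Qed.

Lemma expm_le_1 t i j : 0 <= t -> (i < N)%nat -> (j < N)%nat -> expm N Q t i j <= 1.
Proof.
  intros. rewrite <- (expm_rowsum t i) by auto.
  apply (rsum_term_le N (expm N Q t i)); auto. intros; apply expm_nonneg; auto.
Qed.

Lemma Rabs_expm_le_1 t i j : 0 <= t -> (i < N)%nat -> (j < N)%nat -> Rabs (expm N Q t i j) <= 1.
Proof.
  intros. rewrite Rabs_right by (apply Rle_ge, expm_nonneg; auto). apply expm_le_1; auto.
Qed.

Lemma expm_lipschitz :
  exists L, 0 <= L /\ forall t h i j, 0 <= t -> 0 <= h <= 1 -> (i < N)%nat -> (j < N)%nat ->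
    Rabs (expm N Q (t + h) i j - expm N Q t i j) <= L * h.
Proof.
  destruct (expm_near_idm N Q generator_bounded_entries) as [C [HC Hnear]].
  exists (INR N * C). split; [apply Rmult_le_pos; auto using pos_INR|].
  intros t h i j Ht Hh Hi Hj.
  rewrite expm_plus by auto using generator_bounded_entries.
  replace (expm N Q t i j) with (rsum N (fun k => expm N Q t i k * idm k j))
    by (apply rsum_idm_r; auto).
  rewrite <- rsum_minus. eapply Rle_trans; [apply Rabs_rsum|].
  replace (INR N * C * h) with (INR N * (C * h)) by ring.
  apply rsum_le_const. intros k Hk.
  rewrite <- Rmult_minus_distr_l, Rabs_mult, <- (Rmult_1_l (C * h)).
  apply Rmult_le_compat; auto using Rabs_pos, Rabs_expm_le_1.
Qed.

End Generator.

(** * Continuity, integrals and limits at infinity *)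

Definition clamp (a b x : R) : R := Rmax a (Rmin b x).

(** Continuity on the closed interval [[a, b]], encoded as continuity of the
    extension of [g] by constants outside it (vacuous when [b < a]). *)
Definition cont_on (a b : R) (g : R -> R) : Prop :=
  forall z, continuity_pt (fun x => g (clamp a b x)) z.

Lemma clamp_id a b x : a <= x <= b -> clamp a b x = x.
Proof. intros. unfold clamp, Rmax, Rmin. repeat destruct Rle_dec; lra. Qed.

Lemma clamp_in a b x : a <= b -> a <= clamp a b x <= b.
Proof. intros. unfold clamp, Rmax, Rmin. repeat destruct Rle_dec; lra. Qed.

Lemma Rabs_clamp_le a b x y : Rabs (clamp a b x - clamp a b y) <= Rabs (x - y).
Proof.
  unfold clamp, Rmax, Rmin. repeat destruct Rle_dec; unfold Rabs; repeat destruct Rcase_abs; lra.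
Qed.

Lemma continuity_pt_clamp a b z : continuity_pt (clamp a b) z.
Proof.
  intros eps He. exists eps. split; [exact He|]. intros x [_ Hx].
  simpl in *. unfold R_dist in *. eapply Rle_lt_trans; [apply Rabs_clamp_le|exact Hx].
Qed.

Lemma cont_on_intro a b g :
  (forall t, a <= t <= b -> forall eps, 0 < eps -> exists delta, 0 < delta /\
     forall s, a <= s <= b -> Rabs (s - t) < delta -> Rabs (g s - g t) < eps) ->
  cont_on a b g.
Proof.
  intros Hg z. destruct (Rle_dec a b) as [Hab|Hab].
  - intros eps He. destruct (Hg (clamp a b z) (clamp_in a b z Hab) eps He) as [d [Hd Hs]].
    exists d. split; [exact Hd|]. intros x [_ Hx]. simpl in *. unfold R_dist in *.
    apply Hs; [apply clamp_in; exact Hab|].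
    eapply Rle_lt_trans; [apply Rabs_clamp_le|exact Hx].
  - assert (E : forall x, clamp a b x = a)
      by (intros; unfold clamp, Rmax, Rmin; repeat destruct Rle_dec; lra).
    apply (continuity_pt_ext (fun _ => g a)); [intros; rewrite E; reflexivity|].
    apply continuity_pt_const. intros ? ?; reflexivity.
Qed.

Lemma cont_on_const a b c : cont_on a b (fun _ => c).
Proof. intros z. apply continuity_pt_const. intros ? ?; reflexivity. Qed.

Lemma cont_on_plus a b f g : cont_on a b f -> cont_on a b g -> cont_on a b (fun t => f t + g t).
Proof. intros Hf Hg z. apply (continuity_pt_plus _ _ z (Hf z) (Hg z)). Qed.

Lemma cont_on_mult a b f g : cont_on a b f -> cont_on a b g -> cont_on a b (fun t => f t * g t).
Proof. intros Hf Hg z. apply (continuity_pt_mult _ _ z (Hf z) (Hg z)). Qed.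

Lemma cont_on_Rabs a b g : cont_on a b g -> cont_on a b (fun t => Rabs (g t)).
Proof.
  intros Hg z. apply (continuity_pt_comp (fun x => g (clamp a b x)) Rabs z (Hg z)).
  apply Rcontinuity_abs.
Qed.

Lemma cont_on_rsum a b n (g : nat -> R -> R) :
  (forall k, (k < n)%nat -> cont_on a b (g k)) -> cont_on a b (fun t => rsum n (fun k => g k t)).
Proof.
  induction n; intros H; simpl; [apply cont_on_const|].
  apply cont_on_plus; [apply IHn; auto|apply H; lia].
Qed.

Lemma cont_on_subinterval a b a' b' g :
  a <= a' -> a' <= b' -> b' <= b -> cont_on a b g -> cont_on a' b' g.
Proof.
  intros H1 H2 H3 Hg z.
  apply (continuity_pt_ext (fun x => g (clamp a b (clamp a' b' x)))).
  - intros x. rewrite (clamp_id a b); [reflexivity|]. generalize (clamp_in a' b' x H2). lra.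
  - apply (continuity_pt_comp (clamp a' b') (fun x => g (clamp a b x)));
      [apply continuity_pt_clamp|apply Hg].
Qed.

Lemma cont_on_shift a b c g : cont_on a b g -> cont_on (a + c) (b + c) (fun t => g (t - c)).
Proof.
  intros Hg z.
  apply (continuity_pt_ext (fun x => g (clamp a b (x - c)))).
  - intros x. f_equal. unfold clamp, Rmax, Rmin. repeat destruct Rle_dec; lra.
  - apply (continuity_pt_comp (fun x => x - c) (fun x => g (clamp a b x))); [|apply Hg].
    apply continuity_pt_minus; [apply continuity_pt_id|apply continuity_pt_const; intros ? ?; reflexivity].
Qed.

Lemma ex_RInt_cont_on a b g : a <= b -> cont_on a b g -> ex_RInt g a b.
Proof.
  intros Hab Hg. apply (ex_RInt_ext (fun x => g (clamp a b x))).
  - intros x Hx. rewrite Rmin_left, Rmax_right in Hx by exact Hab.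
    rewrite clamp_id by lra. reflexivity.
  - apply (@ex_RInt_continuous R_CompleteNormedModule). intros z _.
    apply continuity_pt_filterlim, Hg.
Qed.

Lemma cont_on_bounded a b g :
  a <= b -> cont_on a b g -> exists B, 0 <= B /\ forall t, a <= t <= b -> Rabs (g t) <= B.
Proof.
  intros Hab Hg.
  destruct (continuity_ab_maj (fun x => Rabs (g (clamp a b x))) a b Hab) as [M [HM _]].
  - intros c _. apply (cont_on_Rabs a b g Hg).
  - exists (Rabs (g (clamp a b M))). split; [apply Rabs_pos|]. intros t Ht.
    specialize (HM t Ht). simpl in HM. rewrite clamp_id in HM; auto.
Qed.

Lemma ex_RInt_rsum a b n (g : nat -> R -> R) :
  (forall k, (k < n)%nat -> ex_RInt (g k) a b) -> ex_RInt (fun t => rsum n (fun k => g k t)) a b.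
Proof.
  induction n; intros H; simpl; [apply (ex_RInt_const a b 0)|].
  apply (ex_RInt_plus (V := R_NormedModule)); [apply IHn; auto|apply H; lia].
Qed.

Lemma RInt_rsum a b n (g : nat -> R -> R) :
  (forall k, (k < n)%nat -> ex_RInt (g k) a b) ->
  RInt (fun t => rsum n (fun k => g k t)) a b = rsum n (fun k => RInt (g k) a b).
Proof.
  induction n; intros H; simpl.
  - rewrite RInt_const. apply Rmult_0_r.
  - rewrite (RInt_plus (V := R_CompleteNormedModule)), IHn; auto.
    apply ex_RInt_rsum; auto.
Qed.

Lemma Rint_RInt a b g : ex_RInt g a b -> Rint a b g = RInt g a b.
Proof.
  intros H. unfold Rint. destruct excluded_middle_informative as [e|ne].
  - symmetry. apply RInt_Reals.
  - exfalso. apply ne. exists (ex_RInt_Reals_0 g a b H). exact I.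
Qed.

Lemma has_improper_int_is_lim g l :
  has_improper_int g l <-> is_lim (fun T => Rint 0 T g) p_infty l.
Proof.
  rewrite <- is_lim_spec. split.
  - intros H eps. destruct (H eps (cond_pos eps)) as [T0 HT0].
    exists T0. intros T HT. apply HT0. lra.
  - intros H eps He. destruct (H (mkposreal eps He)) as [M HM].
    exists (M + 1). intros T HT. apply HM. lra.
Qed.

Lemma improper_int_is_lim g (l : R) :
  (forall T, 0 <= T -> ex_RInt g 0 T) -> is_lim (fun T => RInt g 0 T) p_infty l ->
  improper_int g = l.
Proof.
  intros Hex Hl.
  assert (Hl' : is_lim (fun T => Rint 0 T g) p_infty l).
  { apply (is_lim_ext_loc (fun T => RInt g 0 T)); [|exact Hl].
    exists 0. intros T HT. symmetry. apply Rint_RInt, Hex. lra. }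
  unfold improper_int. destruct excluded_middle_informative as [e|ne].
  - destruct constructive_indefinite_description as [l' Hl'']. simpl.
    apply has_improper_int_is_lim, is_lim_unique in Hl''.
    apply is_lim_unique in Hl'. rewrite Hl' in Hl''. injection Hl''. auto.
  - exfalso. apply ne. exists l. apply has_improper_int_is_lim, Hl'.
Qed.

Lemma nondecreasing_bounded_cauchy A T1 M :
  (forall T T', T1 <= T <= T' -> A T <= A T') -> (forall T, T1 <= T -> A T <= M) ->
  forall eps, 0 < eps -> exists T0, T1 <= T0 /\ forall T T', T0 <= T <= T' -> A T' - A T < eps.
Proof.
  intros Hmono HM eps He.
  set (E := fun x => exists T, T1 <= T /\ x = A T).
  destruct (completeness E) as [L [Hub Hlub]].
  - exists M. intros x [T [HT ->]]. auto.
  - exists (A T1), T1. split; [lra|reflexivity].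
  - assert (HT0 : exists T0, T1 <= T0 /\ L - eps < A T0).
    { apply NNPP. intros Hn. assert (L <= L - eps); [|lra].
      apply Hlub. intros x [T [HT ->]]. apply Rnot_lt_le. intros Hlt. apply Hn. eauto. }
    destruct HT0 as [T0 [HT0 HL]]. exists T0. split; [exact HT0|]. intros T T' HT.
    assert (A T' <= L) by (apply Hub; exists T'; split; [lra|reflexivity]).
    assert (A T0 <= A T) by (apply Hmono; lra). lra.
Qed.

Lemma ex_lim_p_infty_dominated F A T1 M :
  (forall T T', T1 <= T <= T' -> Rabs (F T' - F T) <= A T' - A T) ->
  (forall T, T1 <= T -> A T <= M) -> exists l : R, is_lim F p_infty l.
Proof.
  intros HFA HM.
  assert (Hmono : forall T T', T1 <= T <= T' -> A T <= A T')
    by (intros T T' HT; generalize (HFA T T' HT) (Rabs_pos (F T' - F T)); lra).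
  apply (filterlim_locally_cauchy (U := R_CompleteSpace) (F := Rbar_locally' p_infty)).
  intros eps.
  destruct (nondecreasing_bounded_cauchy A T1 M Hmono HM eps (cond_pos eps)) as [T0 [HT0 HA]].
  exists (fun T => T0 < T). split; [exists T0; auto|].
  intros u v Hu Hv. change (Rabs (F v - F u) < eps).
  destruct (Rle_dec u v).
  - eapply Rle_lt_trans; [apply HFA; lra|apply HA; lra].
  - rewrite Rabs_minus_sym. eapply Rle_lt_trans; [apply HFA; lra|apply HA; lra].
Qed.

Lemma is_lim_rsum n (F : nat -> R -> R) (l : nat -> R) :
  (forall k, (k < n)%nat -> is_lim (F k) p_infty (l k)) ->
  is_lim (fun T => rsum n (fun k => F k T)) p_infty (rsum n l).
Proof.
  induction n; intros H; simpl; [apply is_lim_const|].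
  apply is_lim_plus'; [apply IHn; auto|apply H; lia].
Qed.

Lemma cont_on_local_lipschitz a b g :
  (forall t, a <= t <= b -> exists d L, 0 < d /\ 0 <= L /\
     forall s, a <= s <= b -> Rabs (s - t) < d -> Rabs (g s - g t) <= L * Rabs (s - t)) ->
  cont_on a b g.
Proof.
  intros Hg. apply cont_on_intro. intros t Ht eps He.
  destruct (Hg t Ht) as [d [L [Hd [HL Hlip]]]].
  exists (Rmin d (eps / (L + 1))). split; [apply Rmin_pos; [lra|apply Rdiv_lt_0_compat; lra]|].
  intros s Hs Hst.
  assert (Rabs (s - t) < d) by (eapply Rlt_le_trans; [apply Hst|apply Rmin_l]).
  assert (Rabs (s - t) < eps / (L + 1)) by (eapply Rlt_le_trans; [apply Hst|apply Rmin_r]).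
  eapply Rle_lt_trans; [apply Hlip; auto|].
  apply Rle_lt_trans with ((L + 1) * Rabs (s - t)); [generalize (Rabs_pos (s - t)); nra|].
  apply Rlt_le_trans with ((L + 1) * (eps / (L + 1))); [apply Rmult_lt_compat_l; lra|].
  right; field; lra.
Qed.

Lemma C1_local_lipschitz h h' t : C1_deriv_on_nonneg h h' -> 0 <= t ->
  exists d L, 0 < d /\ 0 <= L /\
    forall s, 0 <= s -> Rabs (s - t) < d -> Rabs (h s - h t) <= L * Rabs (s - t).
Proof.
  intros [Hd _] Ht. destruct (Hd t Ht 1 Rlt_0_1) as [d [Hd0 Hq]].
  exists d, (Rabs (h' t) + 1). split; [exact Hd0|]. split; [generalize (Rabs_pos (h' t)); lra|].
  intros s Hs Hst. destruct (Req_dec s t) as [->|ne].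
  - rewrite !Rminus_diag, Rabs_R0. lra.
  - specialize (Hq (s - t) ltac:(lra) Hst ltac:(lra)). replace (t + (s - t)) with s in Hq by ring.
    replace (h s - h t) with ((h s - h t) / (s - t) * (s - t)) by (field; lra).
    rewrite Rabs_mult. apply Rmult_le_compat_r; [apply Rabs_pos|].
    replace ((h s - h t) / (s - t)) with (h' t + ((h s - h t) / (s - t) - h' t)) by ring.
    eapply Rle_trans; [apply Rabs_triang|]. lra.
Qed.

Lemma C1_cont_on h h' T : C1_deriv_on_nonneg h h' -> cont_on 0 T h.
Proof.
  intros HC. apply cont_on_local_lipschitz. intros t Ht.
  destruct (C1_local_lipschitz h h' t HC (proj1 Ht)) as [d [L [Hd [HL Hh]]]].
  exists d, L. repeat split; auto. intros s Hs. apply Hh. lra.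
Qed.

Lemma is_lim_p_infty_Rabs_le F (l : R) c T1 :
  is_lim F p_infty l -> (forall T, T1 <= T -> Rabs (F T) <= c) -> Rabs l <= c.
Proof.
  intros Hl Hc.
  apply (is_lim_le_loc (fun T => Rabs (F T)) (fun _ => c) p_infty (Rabs l) c).
  - exists T1. intros T HT. apply Hc. lra.
  - apply (is_lim_Rabs F p_infty l Hl).
  - apply is_lim_const.
Qed.

Lemma RInt_le_plus_const g1 g2 a b c : a <= b -> ex_RInt g1 a b -> ex_RInt g2 a b ->
  (forall t, a < t < b -> g1 t <= g2 t + c) -> RInt g1 a b <= RInt g2 a b + (b - a) * c.
Proof.
  intros Hab H1 H2 Hle.
  replace ((b - a) * c) with (RInt (fun _ => c) a b) by (rewrite RInt_const; reflexivity).
  rewrite <- (RInt_plus (V := R_CompleteNormedModule)) by (auto; apply ex_RInt_const).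
  apply RInt_le; auto. apply (ex_RInt_plus (V := R_NormedModule)); auto; apply ex_RInt_const.
Qed.

Lemma RInt_le_const g a b c : a <= b -> ex_RInt g a b ->
  (forall t, a < t < b -> g t <= c) -> RInt g a b <= (b - a) * c.
Proof.
  intros Hab Hg Hle.
  replace ((b - a) * c) with (RInt (fun _ => c) a b) by (rewrite RInt_const; reflexivity).
  apply RInt_le; auto. apply ex_RInt_const.
Qed.

Lemma nonincreasing_of_quadratic_increments (u : R -> R) e0 C :
  (forall s h, 0 <= s -> 0 < h -> s + h <= e0 -> u (s + h) - u s <= C * h ^ 2) ->
  forall e, 0 < e <= e0 -> u e <= u 0.
Proof.
  intros Hu e He.
  assert (Hn : forall n, (0 < n)%nat -> u e - u 0 <= C * e ^ 2 / INR n).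
  { intros n Hn. assert (HnR : 0 < INR n) by (apply lt_0_INR; exact Hn).
    set (h := e / INR n). assert (Hh : 0 < h) by (apply Rdiv_lt_0_compat; lra).
    replace (u e - u 0) with (rsum n (fun m => u (INR (S m) * h) - u (INR m * h))).
    2: { rewrite (rsum_telescope (fun m => u (INR m * h))). simpl INR.
         unfold h. rewrite Rmult_0_l.
         replace (INR n * (e / INR n)) with e by (field; lra). reflexivity. }
    replace (C * e ^ 2 / INR n) with (INR n * (C * h ^ 2)) by (unfold h; field; lra).
    apply rsum_le_const. intros m Hm.
    assert (Hmh : 0 <= INR m * h) by (apply Rmult_le_pos; [apply pos_INR|lra]).
    assert (INR m + 1 <= INR n) by (rewrite <- S_INR; apply le_INR; lia).
    assert (INR n * h = e) by (unfold h; field; lra).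
    rewrite S_INR, Rmult_plus_distr_r, Rmult_1_l. apply Hu; nra. }
  apply Rnot_lt_le. intros Hlt.
  destruct (INR_unbounded (Rabs C * e ^ 2 / (u e - u 0))) as [m Hm].
  assert (HmR : 0 < INR (S m)) by (apply lt_0_INR; lia).
  assert (Hlarge : Rabs C * e ^ 2 < (u e - u 0) * INR (S m)).
  { apply (Rmult_lt_compat_r (u e - u 0)) in Hm; [|lra].
    unfold Rdiv in Hm. rewrite Rmult_assoc, Rinv_l, Rmult_1_r in Hm by lra.
    rewrite S_INR. nra. }
  assert (Hsmall : (u e - u 0) * INR (S m) <= C * e ^ 2).
  { specialize (Hn (S m) ltac:(lia)).
    apply (Rmult_le_compat_r (INR (S m))) in Hn; [|lra]. unfold Rdiv in Hn.
    rewrite Rmult_assoc, Rinv_l, Rmult_1_r in Hn by lra. exact Hn. }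
  assert (C * e ^ 2 <= Rabs C * e ^ 2)
    by (apply Rmult_le_compat_r; [apply pow2_ge_0|apply Rle_abs]).
  lra.
Qed.

Lemma finite_common_radius n (P : nat -> R -> Prop) :
  (forall k d d', 0 < d' <= d -> P k d -> P k d') ->
  (forall k, (k < n)%nat -> exists d, 0 < d /\ P k d) ->
  exists d, 0 < d /\ forall k, (k < n)%nat -> P k d.
Proof.
  intros Hmono. induction n as [|n IH]; intros H.
  - exists 1. split; [lra|]. intros; lia.
  - destruct IH as [d1 [Hd1 H1]]; [intros; apply H; lia|].
    destruct (H n ltac:(lia)) as [d2 [Hd2 H2]].
    exists (Rmin d1 d2). split; [apply Rmin_pos; auto|]. intros k Hk.
    destruct (Nat.eq_dec k n) as [->|ne].
    + apply (Hmono n d2); auto. split; [apply Rmin_pos; auto|apply Rmin_r].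
    + apply (Hmono k d1); [split; [apply Rmin_pos; auto|apply Rmin_l]|apply H1; lia].
Qed.

(** * The control problem *)

Section Model.

Variables (N : nat) (D : nat -> (nat -> R) -> Prop) (f ft : payoff).
Hypothesis HD : forall i q, (i < N)%nat -> D i q -> InE N i q.
Hypothesis HfI : CondI N D f.
Hypothesis HfC1 : forall i q, (i < N)%nat -> D i q ->
  C1_deriv_on_nonneg (fun t => f t i q) (fun t => ft t i q).

(** [E_{k,G} f(t, X_{t - tau}, G_{X_{t - tau}})]: the payoff rate at time [t] of the
    chain started in [k] at time [tau]. *)
Definition payoff_rate (G : nat -> nat -> R) (tau : R) (k : nat) (t : R) : R :=
  rsum N (fun j => expm N G (t - tau) k j * f t j (G j)).

Definition payoff_envelope (G : nat -> nat -> R) (t : R) : R :=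
  rsum N (fun j => Rabs (f t j (G j))).

Definition value (G : nat -> nat -> R) (tau : R) (k : nat) : R :=
  real (Lim (fun T => RInt (payoff_rate G tau k) tau T) p_infty).

Section Policy.

Variable G : nat -> nat -> R.
Hypothesis HG : InQ N D G.

Let HGgen : is_generator N G := InQ_is_generator N D G HD HG.

Lemma cont_on_expm X k j : (k < N)%nat -> (j < N)%nat -> cont_on 0 X (fun t => expm N G t k j).
Proof.
  intros Hk Hj. destruct (expm_lipschitz N G HGgen) as [L [HL Hlip]].
  apply cont_on_local_lipschitz. intros t Ht. exists 1, L. repeat split; [lra|exact HL|].
  intros s Hs Hst. destruct (Rle_dec t s).
  - specialize (Hlip t (s - t) k j (proj1 Ht)). replace (t + (s - t)) with s in Hlip by ring.
    rewrite (Rabs_right (s - t)) by lra. rewrite Rabs_right in Hst by lra. apply Hlip; auto; lra.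
  - specialize (Hlip s (t - s) k j (proj1 Hs)). replace (s + (t - s)) with t in Hlip by ring.
    rewrite Rabs_minus_sym, (Rabs_minus_sym s t), (Rabs_right (t - s)) by lra.
    rewrite Rabs_minus_sym, Rabs_right in Hst by lra. apply Hlip; auto; lra.
Qed.

Lemma cont_on_payoff_rate tau T k : 0 <= tau <= T -> (k < N)%nat -> cont_on tau T (payoff_rate G tau k).
Proof.
  intros HT Hk. apply cont_on_rsum. intros j Hj. apply cont_on_mult.
  - generalize (cont_on_shift 0 (T - tau) tau _ (cont_on_expm (T - tau) k j Hk Hj)).
    rewrite Rplus_0_l, Rplus_comm, Rplus_minus. easy.
  - apply cont_on_subinterval with 0 T; try lra. apply (C1_cont_on _ _ T (HfC1 j (G j) Hj (HG j Hj))).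
Qed.

Lemma cont_on_payoff_envelope T : cont_on 0 T (payoff_envelope G).
Proof.
  apply cont_on_rsum. intros j Hj. apply cont_on_Rabs.
  apply (C1_cont_on _ _ T (HfC1 j (G j) Hj (HG j Hj))).
Qed.

Lemma ex_RInt_payoff_rate tau a b k :
  0 <= tau <= a -> a <= b -> (k < N)%nat -> ex_RInt (payoff_rate G tau k) a b.
Proof.
  intros. apply ex_RInt_cont_on; [lra|].
  apply cont_on_subinterval with tau b; try lra. apply cont_on_payoff_rate; auto; lra.
Qed.

Lemma ex_RInt_payoff_envelope a b : 0 <= a <= b -> ex_RInt (payoff_envelope G) a b.
Proof.
  intros. apply ex_RInt_cont_on; [lra|].
  apply cont_on_subinterval with 0 b; try lra. apply cont_on_payoff_envelope.
Qed.

Lemma payoff_envelope_nonneg t : 0 <= payoff_envelope G t.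
Proof. apply rsum_nonneg. intros; apply Rabs_pos. Qed.

Lemma Rabs_payoff_rate_le tau k t :
  (k < N)%nat -> tau <= t -> Rabs (payoff_rate G tau k t) <= payoff_envelope G t.
Proof.
  intros Hk Ht. eapply Rle_trans; [apply Rabs_rsum|]. apply rsum_le. intros j Hj.
  rewrite Rabs_mult. apply Rle_trans with (1 * Rabs (f t j (G j))); [|lra].
  apply Rmult_le_compat_r; [apply Rabs_pos|]. apply Rabs_expm_le_1; auto; lra.
Qed.

Lemma Rabs_RInt_payoff_rate_le tau a b k : 0 <= tau <= a -> a <= b -> (k < N)%nat ->
  Rabs (RInt (payoff_rate G tau k) a b) <= RInt (payoff_envelope G) a b.
Proof.
  intros H1 H2 Hk. eapply Rle_trans; [apply abs_RInt_le; auto; apply ex_RInt_payoff_rate; auto|].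
  apply RInt_le; auto.
  - apply ex_RInt_cont_on; auto. apply cont_on_Rabs.
    apply cont_on_subinterval with tau b; try lra. apply cont_on_payoff_rate; auto; lra.
  - apply ex_RInt_payoff_envelope; lra.
  - intros. apply Rabs_payoff_rate_le; auto; lra.
Qed.

Lemma RInt_payoff_envelope_bounded :
  exists M, forall a b, 0 <= a <= b -> RInt (payoff_envelope G) a b <= M.
Proof.
  set (c := 1 + rsum N (fun j => rnorm N (G j))).
  assert (Hnorm : forall j, 0 <= rnorm N (G j)) by (intros; apply rsum_nonneg; intros; apply Rabs_pos).
  assert (Hc : 0 < c) by (unfold c; generalize (rsum_nonneg N _ (fun j _ => Hnorm j)); lra).
  destruct (HfI c Hc) as [M HM]. exists (INR N * M). intros a b Hab.
  assert (Hexj : forall j, (j < N)%nat -> ex_RInt (fun t => Rabs (f t j (G j))) 0 b).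
  { intros j Hj. apply ex_RInt_cont_on; [lra|]. apply cont_on_Rabs.
    apply (C1_cont_on _ _ b (HfC1 j (G j) Hj (HG j Hj))). }
  assert (H0b : RInt (payoff_envelope G) 0 b <= INR N * M).
  { unfold payoff_envelope. rewrite RInt_rsum by exact Hexj.
    apply rsum_le_const. intros j Hj.
    rewrite (RInt_Reals _ _ _ (ex_RInt_Reals_0 _ _ _ (Hexj j Hj))). apply HM; [lra|].
    intros t Ht. split; [apply Rabs_pos|]. intros z Hz. exists (Rabs (f t j (G j))).
    split; [|exact Hz]. exists j, (G j). repeat split; auto.
    unfold c. generalize (rsum_term_le N _ j (fun k _ => Hnorm k) Hj). lra. }
  assert (H0a : 0 <= RInt (payoff_envelope G) 0 a)
    by (apply RInt_ge_0; [lra|apply ex_RInt_payoff_envelope; lra|intros; apply payoff_envelope_nonneg]).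
  rewrite <- (RInt_Chasles (V := R_CompleteNormedModule) (payoff_envelope G) 0 a b) in H0b
    by (apply ex_RInt_payoff_envelope; lra).
  change (plus ?x ?y) with (x + y) in H0b. lra.
Qed.

Lemma is_lim_value tau k : 0 <= tau -> (k < N)%nat ->
  is_lim (fun T => RInt (payoff_rate G tau k) tau T) p_infty (value G tau k).
Proof.
  intros Htau Hk. destruct RInt_payoff_envelope_bounded as [M HM].
  assert (Hex : exists l : R, is_lim (fun T => RInt (payoff_rate G tau k) tau T) p_infty l).
  { apply (ex_lim_p_infty_dominated _ (fun T => RInt (payoff_envelope G) tau T) tau M).
    - intros T T' HT.
      rewrite <- (RInt_Chasles (V := R_CompleteNormedModule) (payoff_rate G tau k) tau T T')
        by (apply ex_RInt_payoff_rate; auto; lra).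
      rewrite <- (RInt_Chasles (V := R_CompleteNormedModule) (payoff_envelope G) tau T T')
        by (apply ex_RInt_payoff_envelope; lra).
      change (plus ?x ?y) with (x + y). rewrite !Rplus_minus_l.
      apply Rabs_RInt_payoff_rate_le; auto; lra.
    - intros T HT. apply HM. lra. }
  destruct Hex as [l Hl]. unfold value. rewrite (is_lim_unique _ _ _ Hl). exact Hl.
Qed.

Lemma value_bounded :
  exists MW, 0 <= MW /\ forall tau k, 0 <= tau -> (k < N)%nat -> Rabs (value G tau k) <= MW.
Proof.
  destruct RInt_payoff_envelope_bounded as [M HM]. exists (Rabs M). split; [apply Rabs_pos|].
  intros tau k Htau Hk. apply (is_lim_p_infty_Rabs_le _ _ _ tau (is_lim_value tau k Htau Hk)).
  intros T HT. eapply Rle_trans; [apply Rabs_RInt_payoff_rate_le; auto; lra|].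
  eapply Rle_trans; [apply HM; lra|apply Rle_abs].
Qed.

Lemma payoff_rate_markov tau h k t : (k < N)%nat ->
  payoff_rate G tau k t = rsum N (fun l => expm N G h k l * payoff_rate G (tau + h) l t).
Proof.
  intros Hk. unfold payoff_rate.
  rewrite (rsum_ext N _ (fun j => rsum N (fun l =>
             expm N G h k l * (expm N G (t - (tau + h)) l j * f t j (G j))))).
  - rewrite rsum_exchange. apply rsum_ext. intros l _. apply rsum_scal_l.
  - intros j Hj. replace (t - tau) with (h + (t - (tau + h))) by ring.
    rewrite expm_plus, <- rsum_scal_r by auto using generator_bounded_entries.
    apply rsum_ext. intros; ring.
Qed.

Lemma ex_RInt_weighted_payoff_rate (w : nat -> R) tau a b : 0 <= tau <= a -> a <= b ->
  ex_RInt (fun t => rsum N (fun k => w k * payoff_rate G tau k t)) a b.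
Proof.
  intros H1 H2. apply ex_RInt_rsum. intros k Hk.
  apply (ex_RInt_scal (V := R_NormedModule)). apply ex_RInt_payoff_rate; auto.
Qed.

Lemma RInt_weighted_payoff_rate (w : nat -> R) tau a b : 0 <= tau <= a -> a <= b ->
  RInt (fun t => rsum N (fun k => w k * payoff_rate G tau k t)) a b
  = rsum N (fun k => w k * RInt (payoff_rate G tau k) a b).
Proof.
  intros H1 H2. rewrite RInt_rsum.
  - apply rsum_ext. intros k Hk. apply (RInt_scal (V := R_CompleteNormedModule)).
    apply ex_RInt_payoff_rate; auto.
  - intros k Hk. apply (ex_RInt_scal (V := R_NormedModule)). apply ex_RInt_payoff_rate; auto.
Qed.

Lemma RInt_payoff_rate_markov tau h k a b : (k < N)%nat -> 0 <= tau + h <= a -> a <= b ->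
  RInt (payoff_rate G tau k) a b
  = rsum N (fun l => expm N G h k l * RInt (payoff_rate G (tau + h) l) a b).
Proof.
  intros Hk H1 H2. rewrite <- RInt_weighted_payoff_rate by auto.
  apply RInt_ext. intros t _. apply payoff_rate_markov, Hk.
Qed.

Lemma value_dynamic_programming tau h k : 0 <= tau -> 0 <= h -> (k < N)%nat ->
  value G tau k = RInt (payoff_rate G tau k) tau (tau + h)
                  + rsum N (fun l => expm N G h k l * value G (tau + h) l).
Proof.
  intros Htau Hh Hk.
  assert (Hlim : is_lim (fun T => RInt (payoff_rate G tau k) tau T) p_infty
            (RInt (payoff_rate G tau k) tau (tau + h)
             + rsum N (fun l => expm N G h k l * value G (tau + h) l))).
  { apply (is_lim_ext_loc (fun T => RInt (payoff_rate G tau k) tau (tau + h) +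
             rsum N (fun l => expm N G h k l * RInt (payoff_rate G (tau + h) l) (tau + h) T))).
    - exists (tau + h). intros T HT.
      rewrite <- RInt_payoff_rate_markov by (auto; lra).
      apply (RInt_Chasles (V := R_CompleteNormedModule)); apply ex_RInt_payoff_rate; auto; lra.
    - apply is_lim_plus'; [apply is_lim_const|]. apply is_lim_rsum. intros l Hl.
      apply (is_lim_scal_l _ (expm N G h k l) p_infty (value G (tau + h) l)).
      apply is_lim_value; auto; lra. }
  apply is_lim_unique in Hlim. rewrite (is_lim_unique _ _ _ (is_lim_value tau k Htau Hk)) in Hlim.
  injection Hlim. auto.
Qed.

Lemma payoff_envelope_bounded_01 :
  exists B, 0 <= B /\ forall t, 0 <= t <= 1 -> payoff_envelope G t <= B.
Proof.
  destruct (cont_on_bounded 0 1 _ ltac:(lra) (cont_on_payoff_envelope 1)) as [B [HB Hb]].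
  exists B. split; [exact HB|]. intros t Ht. eapply Rle_trans; [apply Rle_abs|apply Hb, Ht].
Qed.

Lemma Rabs_f_le_payoff_envelope t j : (j < N)%nat -> Rabs (f t j (G j)) <= payoff_envelope G t.
Proof. intros Hj. apply (rsum_term_le N (fun j => Rabs (f t j (G j)))); auto using Rabs_pos. Qed.

Lemma value_near_0 :
  exists CW, 0 <= CW /\ forall x k, 0 <= x <= 1 -> (k < N)%nat ->
    Rabs (value G x k - value G 0 k) <= CW * x.
Proof.
  destruct value_bounded as [MW [HMW HW]].
  destruct (expm_near_idm N G (generator_bounded_entries N G HGgen)) as [C [HC Hnear]].
  destruct payoff_envelope_bounded_01 as [B [HB Hb]].
  assert (0 <= INR N * C * MW) by (repeat apply Rmult_le_pos; auto using pos_INR).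
  exists (INR N * C * MW + B). split; [lra|].
  intros x k Hx Hk.
  assert (Hdiff : value G x k - value G 0 k
    = rsum N (fun l => (idm k l - expm N G x k l) * value G x l) - RInt (payoff_rate G 0 k) 0 x).
  { rewrite (value_dynamic_programming 0 x k), Rplus_0_l by (auto; lra).
    rewrite (rsum_ext N (fun l => (idm k l - expm N G x k l) * value G x l)
                        (fun l => idm k l * value G x l - expm N G x k l * value G x l))
      by (intros; ring).
    rewrite rsum_minus, rsum_idm_l by exact Hk. ring. }
  rewrite Hdiff, Rmult_plus_distr_r.
  eapply Rle_trans; [apply Rabs_minus_le|]. apply Rplus_le_compat.
  - eapply Rle_trans; [apply Rabs_rsum|].
    replace (INR N * C * MW * x) with (INR N * (C * x * MW)) by ring.
    apply rsum_le_const. intros l Hl. rewrite Rabs_mult.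
    apply Rmult_le_compat; auto using Rabs_pos; [|apply HW; auto; lra].
    rewrite Rabs_minus_sym. apply Hnear, Hx.
  - eapply Rle_trans; [apply Rabs_RInt_payoff_rate_le; auto; lra|].
    replace (B * x) with (RInt (fun _ => B) 0 x)
      by (rewrite RInt_const, Rminus_0_r; apply Rmult_comm).
    apply RInt_le; [lra|apply ex_RInt_payoff_envelope; lra|apply ex_RInt_const|].
    intros t Ht. apply Hb. lra.
Qed.

Lemma Fval_value k : (k < N)%nat -> Fval N f G k = value G 0 k.
Proof.
  intros Hk. unfold Fval. apply improper_int_is_lim.
  - intros T HT. apply (ex_RInt_ext (payoff_rate G 0 k)); [|apply ex_RInt_payoff_rate; auto; lra].
    intros t _. unfold payoff_rate. rewrite Rminus_0_r. reflexivity.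
  - apply (is_lim_ext (fun T => RInt (payoff_rate G 0 k) 0 T)); [|apply is_lim_value; auto; lra].
    intros T. apply RInt_ext. intros t _. unfold payoff_rate. rewrite Rminus_0_r. reflexivity.
Qed.

Lemma payoff_rate_near :
  exists C, 0 <= C /\ forall s t k, (k < N)%nat -> 0 <= s <= t -> t <= 1 ->
    Rabs (payoff_rate G s k t - f t k (G k)) <= C * (t - s).
Proof.
  destruct (expm_near_idm N G (generator_bounded_entries N G HGgen)) as [C [HC Hnear]].
  destruct payoff_envelope_bounded_01 as [B [HB Hb]].
  exists (INR N * C * B). split; [repeat apply Rmult_le_pos; auto using pos_INR|].
  intros s t k Hk Hst Ht. unfold payoff_rate.
  rewrite <- (rsum_idm_l N k (fun j => f t j (G j))), <- rsum_minus by exact Hk.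
  eapply Rle_trans; [apply Rabs_rsum|].
  replace (INR N * C * B * (t - s)) with (INR N * (C * (t - s) * B)) by ring.
  apply rsum_le_const. intros j Hj. rewrite <- Rmult_minus_distr_r, Rabs_mult.
  apply Rmult_le_compat; auto using Rabs_pos; [apply Hnear; lra|].
  eapply Rle_trans; [apply Rabs_f_le_payoff_envelope, Hj|apply Hb; lra].
Qed.

End Policy.

(** The payoff [F(i, Q ⊗_s Qs)]. *)
Definition switched_value (Q Qs : nat -> nat -> R) (i : nat) (s : R) : R :=
  RInt (payoff_rate Q 0 i) 0 s + rsum N (fun k => expm N Q s i k * value Qs s k).

(** Gain, from state [k] at time [s], of following [Q] rather than [Qs] on
    [[s, s + h]] before switching to [Qs]. *)
Definition switch_gain (Q Qs : nat -> nat -> R) (s h : R) (k : nat) : R :=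
  RInt (payoff_rate Q s k) s (s + h) - RInt (payoff_rate Qs s k) s (s + h)
  + rsum N (fun l => (expm N Q h k l - expm N Qs h k l) * value Qs (s + h) l).

(** Up to [O(h (s + h))], this is [h (Gamma_k(Q_k) - Gamma_k(Qs_k))]. *)
Definition switch_gain_first_order (Q Qs : nat -> nat -> R) (s h : R) (k : nat) : R :=
  RInt (fun t => f t k (Q k) - f t k (Qs k)) s (s + h)
  + h * rsum N (fun l => (Q k l - Qs k l) * value Qs (s + h) l).

Lemma concat_rate_after Q Qs i e t :
  rsum N (fun j => rsum N (fun k => expm N Q e i k * expm N Qs (t - e) k j) * f t j (Qs j))
  = rsum N (fun k => expm N Q e i k * payoff_rate Qs e k t).
Proof.
  unfold payoff_rate.
  rewrite (rsum_ext N (fun k => expm N Q e i k * rsum N (fun j => expm N Qs (t - e) k j * f t j (Qs j)))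
             (fun k => rsum N (fun j => expm N Q e i k * expm N Qs (t - e) k j * f t j (Qs j))))
    by (intros k Hk; rewrite <- rsum_scal_l; apply rsum_ext; intros; ring).
  rewrite rsum_exchange. apply rsum_ext. intros j Hj. symmetry. apply rsum_scal_r.
Qed.

Section Switch.

Variables Q Qs : nat -> nat -> R.
Hypotheses (HQ : InQ N D Q) (HQs : InQ N D Qs).

Let HQgen : is_generator N Q := InQ_is_generator N D Q HD HQ.
Let HQsgen : is_generator N Qs := InQ_is_generator N D Qs HD HQs.

Lemma Fconcat_switched_value i e : (i < N)%nat -> 0 < e ->
  Fconcat N f Q Qs e i = switched_value Q Qs i e.
Proof.
  intros Hi He. unfold Fconcat.
  match goal with |- improper_int ?g = _ => set (rate := g) end.
  set (rate_after := fun t => rsum N (fun k => expm N Q e i k * payoff_rate Qs e k t)).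
  assert (Hleft : forall a b, 0 <= a <= b -> b <= e -> RInt rate a b = RInt (payoff_rate Q 0 i) a b
                                                   /\ ex_RInt rate a b).
  { intros a b Hab Hb.
    assert (E : forall t, Rmin a b < t < Rmax a b -> payoff_rate Q 0 i t = rate t).
    { intros t Ht. rewrite Rmin_left, Rmax_right in Ht by lra. unfold rate, payoff_rate.
      destruct Rle_dec; [|lra]. rewrite Rminus_0_r. reflexivity. }
    split; [symmetry; apply RInt_ext, E|apply (ex_RInt_ext _ _ _ _ E), ex_RInt_payoff_rate; auto; lra]. }
  assert (Hright : forall T, e <= T -> RInt rate e T = RInt rate_after e T /\ ex_RInt rate e T).
  { intros T HT.
    assert (E : forall t, Rmin e T < t < Rmax e T -> rate_after t = rate t).
    { intros t Ht. rewrite Rmin_left, Rmax_right in Ht by lra. unfold rate, rate_after.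
      destruct Rle_dec; [lra|]. symmetry. apply concat_rate_after. }
    split; [symmetry; apply RInt_ext, E|].
    apply (ex_RInt_ext _ _ _ _ E), (ex_RInt_weighted_payoff_rate Qs HQs); lra. }
  apply improper_int_is_lim.
  - intros T HT. destruct (Rle_dec T e).
    + apply (Hleft 0 T); lra.
    + apply (ex_RInt_Chasles _ 0 e T); [apply (Hleft 0 e)|apply Hright]; lra.
  - apply (is_lim_ext_loc (fun T => RInt (payoff_rate Q 0 i) 0 e
             + rsum N (fun k => expm N Q e i k * RInt (payoff_rate Qs e k) e T))).
    + exists e. intros T HT.
      rewrite <- (RInt_Chasles (V := R_CompleteNormedModule) rate 0 e T)
        by (apply (Hleft 0 e) || apply Hright; lra).
      rewrite (proj1 (Hleft 0 e ltac:(lra) ltac:(lra))), (proj1 (Hright T ltac:(lra))).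
      unfold rate_after. rewrite (RInt_weighted_payoff_rate Qs HQs) by lra. reflexivity.
    + apply is_lim_plus'; [apply is_lim_const|]. apply is_lim_rsum. intros k Hk.
      apply (is_lim_scal_l _ (expm N Q e i k) p_infty (value Qs e k)).
      apply is_lim_value; auto; lra.
Qed.

Lemma switched_value_0 i : (i < N)%nat -> switched_value Q Qs i 0 = value Qs 0 i.
Proof.
  intros Hi. unfold switched_value. rewrite RInt_point. change (zero : R) with 0. rewrite Rplus_0_l.
  rewrite (rsum_ext N _ (fun k => idm i k * value Qs 0 k))
    by (intros; rewrite expm_0 by apply generator_bounded_entries, HQgen; reflexivity).
  apply rsum_idm_l, Hi.
Qed.

Lemma switched_value_increment i s h : (i < N)%nat -> 0 <= s -> 0 <= h ->
  switched_value Q Qs i (s + h) - switched_value Q Qs i s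
  = rsum N (fun k => expm N Q s i k * switch_gain Q Qs s h k).
Proof.
  intros Hi Hs Hh. unfold switched_value, switch_gain.
  rewrite <- (RInt_Chasles (V := R_CompleteNormedModule) (payoff_rate Q 0 i) 0 s (s + h))
    by (apply ex_RInt_payoff_rate; auto; lra).
  change (plus ?x ?y) with (x + y).
  rewrite (RInt_payoff_rate_markov Q HQ 0 s i s (s + h)), Rplus_0_l by (auto; lra).
  rewrite (rsum_ext N (fun k => expm N Q (s + h) i k * value Qs (s + h) k)
             (fun l => rsum N (fun k => expm N Q s i k * (expm N Q h k l * value Qs (s + h) l))))
    by (intros l Hl; rewrite expm_plus, <- rsum_scal_r by auto using generator_bounded_entries;
        apply rsum_ext; intros; ring).
  rewrite rsum_exchange.
  rewrite (rsum_ext N (fun k => expm N Q s i k * value Qs s k)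
             (fun k => expm N Q s i k * (RInt (payoff_rate Qs s k) s (s + h)
                       + rsum N (fun l => expm N Qs h k l * value Qs (s + h) l))))
    by (intros k Hk; rewrite (value_dynamic_programming Qs HQs s h k) by auto; reflexivity).
  set (W := value Qs (s + h)).
  rewrite (rsum_ext N (fun k => expm N Q s i k * (RInt (payoff_rate Q s k) s (s + h)
             - RInt (payoff_rate Qs s k) s (s + h)
             + rsum N (fun l => (expm N Q h k l - expm N Qs h k l) * W l)))
     (fun k => (expm N Q s i k * RInt (payoff_rate Q s k) s (s + h)
                + rsum N (fun l => expm N Q s i k * (expm N Q h k l * W l)))
               - expm N Q s i k * (RInt (payoff_rate Qs s k) s (s + h)
                                   + rsum N (fun l => expm N Qs h k l * W l)))).
  - rewrite rsum_minus, rsum_plus. ring.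
  - intros k Hk. rewrite rsum_scal_l.
    rewrite (rsum_ext N (fun l => (expm N Q h k l - expm N Qs h k l) * W l)
               (fun l => expm N Q h k l * W l - expm N Qs h k l * W l)), rsum_minus
      by (intros; ring).
    ring.
Qed.

Lemma ex_RInt_f_diff k a b : (k < N)%nat -> 0 <= a <= b ->
  ex_RInt (fun t => f t k (Q k) - f t k (Qs k)) a b.
Proof.
  intros Hk Hab. apply ex_RInt_cont_on; [lra|].
  apply cont_on_subinterval with 0 b; try lra.
  apply (cont_on_plus _ _ _ (fun t => - f t k (Qs k))).
  - apply (C1_cont_on _ _ b (HfC1 k (Q k) Hk (HQ k Hk))).
  - intros z. apply continuity_pt_opp, (C1_cont_on _ _ b (HfC1 k (Qs k) Hk (HQs k Hk))).
Qed.

Lemma payoff_gain_second_order :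
  exists C, 0 <= C /\ forall s h k, (k < N)%nat -> 0 <= s -> 0 <= h -> s + h <= 1 ->
    RInt (payoff_rate Q s k) s (s + h) - RInt (payoff_rate Qs s k) s (s + h)
    <= RInt (fun t => f t k (Q k) - f t k (Qs k)) s (s + h) + C * h ^ 2.
Proof.
  destruct (payoff_rate_near Q HQ) as [C [HC Hrate]].
  destruct (payoff_rate_near Qs HQs) as [Cs [HCs Hrates]].
  exists (C + Cs). split; [lra|]. intros s h k Hk Hs Hh Hsh.
  assert (Hex : ex_RInt (payoff_rate Q s k) s (s + h) /\ ex_RInt (payoff_rate Qs s k) s (s + h))
    by (split; apply ex_RInt_payoff_rate; auto; lra).
  rewrite <- (RInt_minus (V := R_CompleteNormedModule)) by apply Hex.
  replace ((C + Cs) * h ^ 2) with ((s + h - s) * ((C + Cs) * h)) by ring.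
  apply RInt_le_plus_const; [lra|apply (ex_RInt_minus (V := R_NormedModule)); apply Hex|
                             apply ex_RInt_f_diff; auto; lra|].
  intros t Ht.
  assert (H1 := Hrate s t k Hk ltac:(lra) ltac:(lra)).
  assert (H2 := Hrates s t k Hk ltac:(lra) ltac:(lra)).
  apply Rabs_le_between in H1. apply Rabs_le_between in H2.
  assert (C * (t - s) <= C * h) by (apply Rmult_le_compat_l; lra).
  assert (Cs * (t - s) <= Cs * h) by (apply Rmult_le_compat_l; lra).
  change (minus ?x ?y) with (x - y). lra.
Qed.

Lemma transition_gain_second_order :
  exists C, 0 <= C /\ forall s h k, (k < N)%nat -> 0 <= s -> 0 <= h -> h <= 1 ->
    rsum N (fun l => (expm N Q h k l - expm N Qs h k l) * value Qs (s + h) l)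
    <= h * rsum N (fun l => (Q k l - Qs k l) * value Qs (s + h) l) + C * h ^ 2.
Proof.
  destruct (expm_near_linear N Q (generator_bounded_entries N Q HQgen)) as [C [HC Hlin]].
  destruct (expm_near_linear N Qs (generator_bounded_entries N Qs HQsgen)) as [Cs [HCs Hlins]].
  destruct (value_bounded Qs HQs) as [MW [HMW HW]].
  exists (INR N * ((C + Cs) * MW)). split; [repeat apply Rmult_le_pos; auto using pos_INR; lra|].
  intros s h k Hk Hs Hh Hh1. set (W := value Qs (s + h)).
  assert (Hsum : rsum N (fun l => (expm N Q h k l - expm N Qs h k l) * W l
                                  - h * ((Q k l - Qs k l) * W l))
                 <= INR N * ((C + Cs) * h ^ 2 * MW)).
  { apply rsum_le_const. intros l Hl.
    replace ((expm N Q h k l - expm N Qs h k l) * W l - h * ((Q k l - Qs k l) * W l))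
      with (((expm N Q h k l - idm k l - h * Q k l) - (expm N Qs h k l - idm k l - h * Qs k l))
            * W l) by ring.
    eapply Rle_trans; [apply Rle_abs|]. rewrite Rabs_mult.
    apply Rmult_le_compat; auto using Rabs_pos; [|apply HW; auto; lra].
    eapply Rle_trans; [apply Rabs_minus_le|].
    generalize (Hlin h k l Hk ltac:(lra)) (Hlins h k l Hk ltac:(lra)). lra. }
  rewrite rsum_minus, rsum_scal_l in Hsum. lra.
Qed.

Lemma switch_gain_second_order :
  exists C, 0 <= C /\ forall s h k, (k < N)%nat -> 0 <= s -> 0 <= h -> s + h <= 1 ->
    switch_gain Q Qs s h k <= switch_gain_first_order Q Qs s h k + C * h ^ 2.
Proof.
  destruct payoff_gain_second_order as [C1 [HC1 Hpayoff]].
  destruct transition_gain_second_order as [C2 [HC2 Htransition]].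
  exists (C1 + C2). split; [lra|]. intros s h k Hk Hs Hh Hsh.
  unfold switch_gain, switch_gain_first_order.
  generalize (Hpayoff s h k Hk Hs Hh Hsh) (Htransition s h k Hk Hs Hh ltac:(lra)). lra.
Qed.

Lemma f_diff_near_0 k : (k < N)%nat ->
  exists d L, 0 < d /\ 0 <= L /\ forall t, 0 <= t <= d ->
    f t k (Q k) - f t k (Qs k) <= f 0 k (Q k) - f 0 k (Qs k) + L * t.
Proof.
  intros Hk.
  destruct (C1_local_lipschitz _ _ 0 (HfC1 k (Q k) Hk (HQ k Hk)) (Rle_refl 0)) as [d1 [L1 [Hd1 [HL1 H1]]]].
  destruct (C1_local_lipschitz _ _ 0 (HfC1 k (Qs k) Hk (HQs k Hk)) (Rle_refl 0)) as [d2 [L2 [Hd2 [HL2 H2]]]].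
  exists (Rmin d1 d2 / 2), (L1 + L2). split; [generalize (Rmin_pos _ _ Hd1 Hd2); lra|]. split; [lra|].
  intros t Ht. assert (Hmin := Rmin_l d1 d2). assert (Hmin' := Rmin_r d1 d2).
  assert (Hlt : Rabs (t - 0) < d1 /\ Rabs (t - 0) < d2)
    by (rewrite Rminus_0_r, Rabs_right by lra; split; lra).
  specialize (H1 t (proj1 Ht) (proj1 Hlt)). specialize (H2 t (proj1 Ht) (proj2 Hlt)).
  rewrite !Rminus_0_r, (Rabs_right t) in H1, H2 by lra.
  apply Rabs_le_between in H1. apply Rabs_le_between in H2. lra.
Qed.

Lemma value_diff_near_0 k :
  exists C, 0 <= C /\ forall x, 0 <= x <= 1 ->
    rsum N (fun l => (Q k l - Qs k l) * value Qs x l)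
    <= rsum N (fun l => (Q k l - Qs k l) * value Qs 0 l) + C * x.
Proof.
  destruct (value_near_0 Qs HQs) as [CW [HCW Hnear]].
  set (DQ := rsum N (fun l => Rabs (Q k l - Qs k l))).
  assert (HDQ : 0 <= DQ) by (apply rsum_nonneg; intros; apply Rabs_pos).
  exists (DQ * CW). split; [apply Rmult_le_pos; auto|]. intros x Hx.
  assert (Hsum : rsum N (fun l => (Q k l - Qs k l) * value Qs x l - (Q k l - Qs k l) * value Qs 0 l)
                 <= DQ * (CW * x)).
  { unfold DQ. rewrite <- rsum_scal_r. apply rsum_le. intros l Hl.
    rewrite <- Rmult_minus_distr_l. eapply Rle_trans; [apply Rle_abs|]. rewrite Rabs_mult.
    apply Rmult_le_compat_l; [apply Rabs_pos|]. apply Hnear; auto. }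
  rewrite rsum_minus in Hsum. lra.
Qed.

Lemma Gamma_diff k : (k < N)%nat ->
  Gamma N f Qs k (Q k) - Gamma N f Qs k (Qs k)
  = f 0 k (Q k) - f 0 k (Qs k) + rsum N (fun l => (Q k l - Qs k l) * value Qs 0 l).
Proof.
  intros Hk. unfold Gamma.
  rewrite (rsum_ext N (fun l => (Q k l - Qs k l) * value Qs 0 l)
             (fun l => Q k l * Fval N f Qs l - Qs k l * Fval N f Qs l)), rsum_minus.
  - ring.
  - intros l Hl. rewrite Fval_value by auto. ring.
Qed.

Lemma switch_gain_first_order_nonpos_at k : (k < N)%nat ->
  (Q k <> Qs k -> Gamma N f Qs k (Qs k) > Gamma N f Qs k (Q k)) ->
  exists e, 0 < e /\ forall s h, 0 <= s -> 0 <= h -> s + h <= e ->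
    switch_gain_first_order Q Qs s h k <= 0.
Proof.
  intros Hk Hgam. unfold switch_gain_first_order.
  destruct (classic (Q k = Qs k)) as [Heq|Hne].
  - exists 1. split; [lra|]. intros s h Hs Hh Hsh.
    rewrite (RInt_ext _ (fun _ => 0)) by (intros; rewrite Heq; apply Rminus_diag).
    rewrite RInt_const, rsum_eq_0 by (intros; rewrite Heq; ring).
    change (scal (s + h - s) 0) with ((s + h - s) * 0). lra.
  - destruct (f_diff_near_0 k Hk) as [d [L [Hd [HL Hf]]]].
    destruct (value_diff_near_0 k) as [C [HC Hv]].
    set (gam := f 0 k (Q k) - f 0 k (Qs k) + rsum N (fun l => (Q k l - Qs k l) * value Qs 0 l)).
    assert (Hneg : gam < 0) by (specialize (Hgam Hne); unfold gam; rewrite <- Gamma_diff by exact Hk; lra).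
    assert (HK : 0 < L + C + 1) by lra.
    exists (Rmin (Rmin d 1) (- gam / (L + C + 1))).
    split; [repeat apply Rmin_pos; try apply Rdiv_lt_0_compat; lra|]. intros s h Hs Hh Hsh.
    assert (Hd' : s + h <= d /\ s + h <= 1).
    { generalize (Rmin_l (Rmin d 1) (- gam / (L + C + 1))) (Rmin_l d 1) (Rmin_r d 1). lra. }
    assert (Hsmall : (L + C + 1) * (s + h) <= - gam).
    { generalize (Rmin_r (Rmin d 1) (- gam / (L + C + 1))). intros Hr.
      replace (- gam) with ((L + C + 1) * (- gam / (L + C + 1))) by (field; lra).
      apply Rmult_le_compat_l; lra. }
    assert (Hint : RInt (fun t => f t k (Q k) - f t k (Qs k)) s (s + h)
                   <= (s + h - s) * (f 0 k (Q k) - f 0 k (Qs k) + L * (s + h))).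
    { apply RInt_le_const; [lra|apply ex_RInt_f_diff; auto; lra|]. intros t Ht.
      eapply Rle_trans; [apply Hf; lra|]. apply Rplus_le_compat_l, Rmult_le_compat_l; lra. }
    assert (Hval := Hv (s + h) ltac:(lra)).
    replace (s + h - s) with h in Hint by ring.
    assert (h * (gam + (L + C) * (s + h)) <= 0) by (apply Rmult_le_0_l; lra).
    unfold gam in *. nra.
Qed.

Lemma switched_value_le i : (i < N)%nat ->
  (forall k, (k < N)%nat -> Q k <> Qs k -> Gamma N f Qs k (Qs k) > Gamma N f Qs k (Q k)) ->
  exists e0, 0 < e0 /\ forall e, 0 < e <= e0 -> switched_value Q Qs i e <= switched_value Q Qs i 0.
Proof.
  intros Hi Hgam. destruct switch_gain_second_order as [C [HC Hsecond]].
  destruct (finite_common_radius N (fun k d => forall s h, 0 <= s -> 0 <= h -> s + h <= d ->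
              switch_gain_first_order Q Qs s h k <= 0)) as [e1 [He1 Hfirst]].
  - intros k d d' Hd' Hk s h Hs Hh Hsh. apply Hk; auto; lra.
  - intros k Hk. apply switch_gain_first_order_nonpos_at; auto.
  exists (Rmin e1 1). split; [apply Rmin_pos; lra|].
  apply (nonincreasing_of_quadratic_increments (switched_value Q Qs i) (Rmin e1 1) C).
  intros s h Hs Hh Hsh.
  assert (Hsh' : s + h <= e1 /\ s + h <= 1) by (generalize (Rmin_l e1 1) (Rmin_r e1 1); lra).
  rewrite switched_value_increment by (auto; lra).
  rewrite <- (Rmult_1_l (C * h ^ 2)), <- (expm_rowsum N Q HQgen s i Hi), <- rsum_scal_r.
  apply rsum_le. intros k Hk. apply Rmult_le_compat_l; [apply expm_nonneg; auto|].
  assert (switch_gain_first_order Q Qs s h k <= 0) by (apply Hfirst; auto; lra).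
  assert (switch_gain Q Qs s h k <= switch_gain_first_order Q Qs s h k + C * h ^ 2)
    by (apply Hsecond; auto; lra).
  lra.
Qed.

End Switch.

End Model.

Theorem mainTheorem4
  (N : nat) (D : nat -> (nat -> R) -> Prop)
  (HD : forall i q, (i < N)%nat -> D i q -> InE N i q)
  (f ft : payoff)
  (HfI : CondI N D f)
  (HfC1 : forall i q, (i < N)%nat -> D i q ->
            C1_deriv_on_nonneg (fun t => f t i q) (fun t => ft t i q))
  (HftI : CondI N D ft)
  (HR : CondR N D f ft)
  (Qs : nat -> nat -> R) (HQs : InQ N D Qs)
  (Hgamma : forall i Q, (i < N)%nat -> InQ N D Q -> Q i <> Qs i ->
              Gamma N f Qs i (Qs i) > Gamma N f Qs i (Q i)) :
  StrongEq N D f Qs.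
Proof.
  intros i Q Hi HQ.
  destruct (switched_value_le N D f ft HD HfI HfC1 Q Qs HQ HQs i Hi
              (fun k Hk => Hgamma k Q Hk HQ)) as [e0 [He0 Hle]].
  exists e0. split; [exact He0|]. intros e He.
  rewrite (Fval_value N D f ft HD HfI HfC1 Qs HQs i Hi).
  rewrite (Fconcat_switched_value N D f ft HD HfI HfC1 Q Qs HQ HQs i e Hi) by lra.
  rewrite <- (switched_value_0 N D f HD Q Qs HQ i Hi).
  apply Rle_ge, Hle, He.
Qed.
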